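(* Let $T=\operatorname{Th}(\mathbb{Z};+,<,0)$ (Presburger arithmetic), $\mathcal{U}$ a monster model of $T$ containing $\mathbb{Z}$ as an elementary submodel, and $\mu\in\mathfrak{M}_x(\mathcal{U})$, $\nu\in\mathfrak{M}_y(\mathcal{U})$ (one variable each). (1) If $\mu(x>b)=\nu(y>b)=1$ for every $b\in\mathcal{U}$, then $\mu\geq_{\mathbb{E},\mathbb{Z}}\nu$. (2) If $\mu(x<b)=\nu(y<b)=1$ for every $b\in\mathcal{U}$, then $\mu\geq_{\mathbb{E},\mathbb{Z}}\nu$.
   Context: For $C\subseteq\mathcal{U}$, $\mathcal{L}_x(C)$ is the Boolean algebra of formulas in $x$ with parameters from $C$ modulo $T$, embedded in $\mathcal{L}_{xy}(C)$ via $\varphi(x)\mapsto\varphi(x)\wedge y=y$; $\mathfrak{M}_x(C)$ is the set of finitely additive probability measures (Keisler measures) on $\mathcal{L}_x(C)$. For $\omega\in\mathfrak{M}_{xy}(C)$, $\pi_x(\omega)(\varphi(x))=\omega(\varphi(x)\wedge y=y)$ (similarly $\pi_y$); $\omega|_D$ is restriction. $\mu\geq_{\mathbb{E},\mathbb{Z}}\nu$ means there is $\lambda\in\mathfrak{M}_{xy}(\mathbb{Z})$ with $\pi_x(\lambda)=\mu|_{\mathbb{Z}}$ such that every $\omega\in\mathfrak{M}_{xy}(\mathcal{U})$ with $\omega|_{\mathbb{Z}}=\lambda$ and $\pi_x(\omega)=\mu$ satisfies $\pi_y(\omega)=\nu$. *)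

From Stdlib Require Import Reals ZArith List.
Set Implicit Arguments.

Record structure := Struct {
  car :> Type;
  s0 : car;
  sadd : car -> car -> car;
  slt : car -> car -> Prop }.

Inductive term (P : Type) : Type :=
| tvar (n : nat) | tpar (p : P) | tzero | tadd (t1 t2 : term P).

Inductive form (P : Type) : Type :=
| feq (t1 t2 : term P) | flt (t1 t2 : term P) | fbot
| fneg (f : form P) | fand (f g : form P) | fex (n : nat) (f : form P).

Arguments tvar {P}. Arguments tzero {P}. Arguments fbot {P}.

Definition fOr (P : Type) (f g : form P) : form P := fneg (fand (fneg f) (fneg g)).

Definition upd (M : Type) (v : nat -> M) (n : nat) (a : M) : nat -> M :=
  fun k => if Nat.eqb k n then a else v k.

Fixpoint teval {M : structure} (v : nat -> M) (t : term M) : M :=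
  match t with
  | tvar n => v n
  | tpar p => p
  | tzero => s0 M
  | tadd t1 t2 => sadd M (teval v t1) (teval v t2)
  end.

Fixpoint sat {M : structure} (v : nat -> M) (f : form M) : Prop :=
  match f with
  | feq t1 t2 => teval v t1 = teval v t2
  | flt t1 t2 => slt M (teval v t1) (teval v t2)
  | fbot => False
  | fneg g => ~ sat v g
  | fand g h => sat v g /\ sat v h
  | fex n g => exists a : M, sat (upd v n a) g
  end.

Fixpoint tmap (P Q : Type) (i : P -> Q) (t : term P) : term Q :=
  match t with
  | tvar n => tvar n
  | tpar p => tpar (i p)
  | tzero => tzero
  | tadd t1 t2 => tadd (tmap i t1) (tmap i t2)
  end.

Fixpoint fmap (P Q : Type) (i : P -> Q) (f : form P) : form Q :=
  match f with
  | feq t1 t2 => feq (tmap i t1) (tmap i t2)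
  | flt t1 t2 => flt (tmap i t1) (tmap i t2)
  | fbot => fbot
  | fneg g => fneg (fmap i g)
  | fand g h => fand (fmap i g) (fmap i h)
  | fex n g => fex n (fmap i g)
  end.

Fixpoint tfv_in (P : Type) (S : nat -> Prop) (t : term P) : Prop :=
  match t with
  | tvar n => S n
  | tpar _ => True
  | tzero => True
  | tadd t1 t2 => tfv_in S t1 /\ tfv_in S t2
  end.

Fixpoint fv_in (P : Type) (S : nat -> Prop) (f : form P) : Prop :=
  match f with
  | feq t1 t2 | flt t1 t2 => tfv_in S t1 /\ tfv_in S t2
  | fbot => True
  | fneg g => fv_in S g
  | fand g h => fv_in S g /\ fv_in S h
  | fex n g => fv_in (fun k => k = n \/ S k) g
  end.

Fixpoint tpar_in (P : Type) (C : P -> Prop) (t : term P) : Prop :=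
  match t with
  | tvar _ => True
  | tpar p => C p
  | tzero => True
  | tadd t1 t2 => tpar_in C t1 /\ tpar_in C t2
  end.

Fixpoint par_in (P : Type) (C : P -> Prop) (f : form P) : Prop :=
  match f with
  | feq t1 t2 | flt t1 t2 => tpar_in C t1 /\ tpar_in C t2
  | fbot => True
  | fneg g => par_in C g
  | fand g h => par_in C g /\ par_in C h
  | fex _ g => par_in C g
  end.

Definition Zstruct : structure := @Struct Z 0%Z Z.add Z.lt.

Definition elementary_emb (M N : structure) (i : M -> N) : Prop :=
  forall (f : form M) (v : nat -> M),
    sat v f <-> sat (fun n => i (v n)) (fmap i f).

(* Variables: x = variable 0, y = variable 1. *)
Definition Sx : nat -> Prop := fun k => k = 0%nat.
Definition Sy : nat -> Prop := fun k => k = 1%nat.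
Definition Sxy : nat -> Prop := fun k => k = 0%nat \/ k = 1%nat.
Definition vx {P : Type} : term P := tvar 0.
Definition vy {P : Type} : term P := tvar 1.

Definition formula_in {U : structure} (C : U -> Prop) (S : nat -> Prop)
  (f : form U) : Prop := fv_in S f /\ par_in C f.

(* Equivalence modulo T (U is a model of the elementary diagram). *)
Definition fequiv {U : structure} (f g : form U) : Prop :=
  forall v : nat -> U, sat v f <-> sat v g.

(* m : form U -> R represents a Keisler measure on L_S(C), i.e. a finitely
   additive probability measure on the Lindenbaum algebra of formulas with
   free variables in S and parameters from C modulo T.  Values of m outside
   those formulas are irrelevant. *)
Definition keisler {U : structure} (C : U -> Prop) (S : nat -> Prop)
  (m : form U -> R) : Prop :=
  (forall f g, formula_in C S f -> formula_in C S g -> fequiv f g -> m f = m g)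
  /\ (forall f, formula_in C S f -> (0 <= m f)%R)
  /\ (forall f, formula_in C S f -> (forall v, sat v f) -> m f = 1%R)
  /\ (forall f g, formula_in C S f -> formula_in C S g ->
        (forall v, ~ (sat v f /\ sat v g)) -> m (fOr f g) = (m f + m g)%R).

Definition inZ {U : structure} (iota : Z -> U) : U -> Prop :=
  fun u => exists z : Z, u = iota z.

Definition allU (U : structure) : U -> Prop := fun _ => True.

Definition geqEZ {U : structure} (iota : Z -> U) (mu nu : form U -> R) : Prop :=
  exists lam : form U -> R,
    keisler (inZ iota) Sxy lam /\
    (forall f, formula_in (inZ iota) Sx f -> lam (fand f (feq vy vy)) = mu f) /\
    (forall om : form U -> R,
        keisler (@allU U) Sxy om ->
        (forall f, formula_in (inZ iota) Sxy f -> om f = lam f) ->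
        (forall f, formula_in (@allU U) Sx f -> om (fand f (feq vy vy)) = mu f) ->
        forall f, formula_in (@allU U) Sy f -> om (fand (feq vx vx) f) = nu f).

(* |A| < |U| *)
Definition small {U : structure} (A : U -> Prop) : Prop :=
  ~ exists g : U -> U, (forall a b, g a = g b -> a = b) /\ (forall a, A (g a)).

Definition saturated (U : structure) : Prop :=
  forall (A : U -> Prop) (p : form U -> Prop),
    small A ->
    (forall f, p f -> formula_in A Sx f) ->
    (forall l : list (form U), (forall f, In f l -> p f) ->
        exists v : nat -> U, forall f, In f l -> sat v f) ->
    exists v : nat -> U, forall f, p f -> sat v f.

(* By Cooper's quantifier elimination, every Presburger formula phi(xs, y) over Z is
   eventually periodic in y, uniformly in xs: there is N such that for all xs, beyond some
   bound the truth of phi depends only on y mod N.  Coding the parameters of a formula over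
   U as extra variables, this transfers to U along the elementary embedding.

   In case (1) put, with N a period of phi,
     lambda(phi) = sum_(j < N) nu(y = j mod N) *
                   mu(exists b, forall a > b, a = j mod N -> phi(x, a)).
   Refining N does not change the value, so lambda is a finitely additive probability
   measure; its x-marginal is mu and lambda(x < y) = 1.  If omega extends lambda and has
   x-marginal mu, then omega(b < x) = 1 and omega(x < y) = 1 give omega(b < y) = 1 for
   every b, while omega and nu agree on each class y = j mod N.  By eventual periodicity,
   a measure in y concentrating beyond every b is determined by its values on these
   classes, so the y-marginal of omega is nu.  Case (2) is the mirror image. *)

From Stdlib Require Import Reals ZArith List Lia Lra.
From Stdlib Require Import Classical FunctionalExtensionality ClassicalEpsilon.

(* Keeps the [max] of [fvar_bound] folded under [simpl], where [lia] can use it. *)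
Local Arguments Nat.max : simpl never.

(** * Satisfaction and elementary transfer *)

Section Update.
Context {M : Type}.

Lemma upd_eq (v : nat -> M) n a : upd v n a n = a.
Proof. unfold upd. now rewrite Nat.eqb_refl. Qed.

Lemma upd_neq (v : nat -> M) n a k : k <> n -> upd v n a k = v k.
Proof. intro H. unfold upd. destruct (Nat.eqb_spec k n); congruence. Qed.

Lemma upd_shadow (v : nat -> M) n a b : upd (upd v n a) n b = upd v n b.
Proof. apply functional_extensionality; intro k. unfold upd. now destruct (Nat.eqb k n). Qed.

Lemma upd_comm (v : nat -> M) n m a b :
  n <> m -> upd (upd v n a) m b = upd (upd v m b) n a.
Proof.
  intro H. apply functional_extensionality; intro k. unfold upd.
  destruct (Nat.eqb_spec k m), (Nat.eqb_spec k n); subst; congruence.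
Qed.

Lemma upd_id (v : nat -> M) n : upd v n (v n) = v.
Proof.
  apply functional_extensionality; intro k. unfold upd.
  destruct (Nat.eqb_spec k n); congruence.
Qed.

End Update.

Ltac upd_simpl := repeat (rewrite upd_eq || rewrite upd_neq by lia).

Definition fall {P : Type} (n : nat) (f : form P) : form P := fneg (fex n (fneg f)).
Definition fimp {P : Type} (f g : form P) : form P := fneg (fand f (fneg g)).
Definition fiff {P : Type} (f g : form P) : form P := fand (fimp f g) (fimp g f).

Section Satisfaction.
Context {U : structure}.
Implicit Types (v : nat -> U) (f g : form U).

Lemma sat_fand v f g : sat v (fand f g) <-> sat v f /\ sat v g.
Proof. reflexivity. Qed.

Lemma sat_fex v n f : sat v (fex n f) <-> exists a, sat (upd v n a) f.
Proof. reflexivity. Qed.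

Lemma sat_fall v n f : sat v (fall n f) <-> forall a, sat (upd v n a) f.
Proof. simpl. split; [intros H a; apply NNPP; eauto | intros H [a Ha]; auto]. Qed.

Lemma sat_fimp v f g : sat v (fimp f g) <-> (sat v f -> sat v g).
Proof. simpl. split; [intros H Hf; apply NNPP|]; tauto. Qed.

Lemma sat_fiff v f g : sat v (fiff f g) <-> (sat v f <-> sat v g).
Proof. unfold fiff. rewrite sat_fand, !sat_fimp. tauto. Qed.

Lemma sat_fOr v f g : sat v (fOr f g) <-> sat v f \/ sat v g.
Proof. simpl. split; [intro H; apply NNPP|]; tauto. Qed.

End Satisfaction.

Section FmapDerived.
Context {P Q : Type} (i : P -> Q).

Lemma fmap_fand f g : fmap i (fand f g) = fand (fmap i f) (fmap i g).
Proof. reflexivity. Qed.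

Lemma fmap_fex n f : fmap i (fex n f) = fex n (fmap i f).
Proof. reflexivity. Qed.

Lemma fmap_fall n f : fmap i (fall n f) = fall n (fmap i f).
Proof. reflexivity. Qed.

Lemma fmap_fimp f g : fmap i (fimp f g) = fimp (fmap i f) (fmap i g).
Proof. reflexivity. Qed.

End FmapDerived.

Fixpoint tvar_bound {P : Type} (t : term P) : nat :=
  match t with
  | tvar n => S n
  | tpar _ | tzero => 0
  | tadd t1 t2 => max (tvar_bound t1) (tvar_bound t2)
  end.

Fixpoint fvar_bound {P : Type} (f : form P) : nat :=
  match f with
  | feq t1 t2 | flt t1 t2 => max (tvar_bound t1) (tvar_bound t2)
  | fbot => 0
  | fneg g => fvar_bound g
  | fand g h => max (fvar_bound g) (fvar_bound h)
  | fex n g => max (S n) (fvar_bound g)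
  end.

Lemma tvar_bound_tmap {P Q : Type} (i : P -> Q) t : tvar_bound (tmap i t) = tvar_bound t.
Proof. induction t; simpl; auto. Qed.

Lemma fvar_bound_fmap {P Q : Type} (i : P -> Q) f : fvar_bound (fmap i f) = fvar_bound f.
Proof. induction f; simpl; rewrite ?tvar_bound_tmap, ?IHf, ?IHf1, ?IHf2; auto. Qed.

Lemma teval_agree_below {U : structure} (t : term U) (v w : nat -> U) :
  (forall n, n < tvar_bound t -> v n = w n) -> teval v t = teval w t.
Proof.
  induction t; simpl; intros H; auto.
  rewrite IHt1, IHt2; auto; intros n Hn; apply H; lia.
Qed.

Lemma sat_agree_below {U : structure} (f : form U) (v w : nat -> U) :
  (forall n, n < fvar_bound f -> v n = w n) -> (sat v f <-> sat w f).
Proof.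
  revert v w; induction f; simpl; intros v w H.
  1, 2: rewrite (teval_agree_below t1 v w), (teval_agree_below t2 v w);
        try tauto; intros; apply H; lia.
  - tauto.
  - rewrite (IHf v w); tauto.
  - rewrite (IHf1 v w), (IHf2 v w); try tauto; intros; apply H; lia.
  - assert (Hu : forall a, sat (upd v n a) f <-> sat (upd w n a) f).
    { intro a. apply IHf. intros k Hk. unfold upd.
      destruct (Nat.eqb_spec k n); auto. apply H. lia. }
    split; intros [a Ha]; exists a; apply Hu; exact Ha.
Qed.

Lemma teval_agree_fv {U : structure} (S : nat -> Prop) (t : term U) (v w : nat -> U) :
  (forall n, S n -> v n = w n) -> tfv_in S t -> teval v t = teval w t.
Proof. induction t; simpl; intros H Ht; auto. destruct Ht. rewrite IHt1, IHt2; auto. Qed.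

Lemma sat_agree_fv {U : structure} (f : form U) (S : nat -> Prop) (v w : nat -> U) :
  (forall n, S n -> v n = w n) -> fv_in S f -> (sat v f <-> sat w f).
Proof.
  revert S v w; induction f; simpl; intros S v w H Hf.
  1, 2: destruct Hf; rewrite (teval_agree_fv S t1 v w), (teval_agree_fv S t2 v w); tauto.
  - tauto.
  - rewrite (IHf S v w); tauto.
  - destruct Hf. rewrite (IHf1 S v w), (IHf2 S v w); tauto.
  - assert (Hu : forall a, sat (upd v n a) f <-> sat (upd w n a) f).
    { intro a. apply (IHf _ _ _) with (2 := Hf). intros k Hk.
      unfold upd. destruct (Nat.eqb_spec k n), Hk; auto; congruence. }
    split; intros [a Ha]; exists a; apply Hu; exact Ha.
Qed.

Lemma tfv_in_mono {P : Type} (S S' : nat -> Prop) (t : term P) :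
  (forall k, S k -> S' k) -> tfv_in S t -> tfv_in S' t.
Proof. induction t; simpl; intuition. Qed.

Lemma fv_in_mono {P : Type} (f : form P) (S S' : nat -> Prop) :
  (forall k, S k -> S' k) -> fv_in S f -> fv_in S' f.
Proof.
  revert S S'; induction f; simpl; intros S S' H Hf; intuition eauto using tfv_in_mono.
  eapply IHf; [|exact Hf]. simpl; intuition.
Qed.

Lemma par_in_allU {U : structure} (f : form U) : par_in (@allU U) f.
Proof.
  assert (Ht : forall t : term U, tpar_in (@allU U) t)
    by (induction t; simpl; unfold allU; auto).
  induction f; simpl; auto.
Qed.

Fixpoint fclose {P : Type} (K : nat) (f : form P) : form P :=
  match K with 0 => f | S K => fclose K (fall K f) end.

Lemma sat_fclose {U : structure} K (f : form U) (v : nat -> U) :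
  sat v (fclose K f) <-> forall w, (forall n, K <= n -> w n = v n) -> sat w f.
Proof.
  revert f v; induction K; simpl; intros f v.
  - split; [|intro H; apply H; auto].
    intros H w Hw. replace w with v; auto.
    apply functional_extensionality; intro; symmetry; apply Hw; lia.
  - rewrite IHK. split.
    + intros H w Hw.
      assert (Hagree : forall n, K <= n -> upd w K (v K) n = v n).
      { intros n Hn. unfold upd. destruct (Nat.eqb_spec n K); subst; auto. apply Hw; lia. }
      specialize (H (upd w K (v K)) Hagree). rewrite sat_fall in H.
      specialize (H (w K)). now rewrite upd_shadow, upd_id in H.
    + intros H w Hw. rewrite sat_fall. intro a. apply H.
      intros n Hn. rewrite upd_neq by lia. apply Hw; lia.
Qed.

Lemma fmap_fclose {P Q : Type} (i : P -> Q) K f : fmap i (fclose K f) = fclose K (fmap i f).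
Proof. revert f; induction K; simpl; auto. Qed.

Lemma elementary_valid (U : structure) (iota : Z -> U) :
  elementary_emb Zstruct U iota ->
  forall T : form Zstruct, (forall v, sat v T) -> forall w : nat -> U, sat w (fmap iota T).
Proof.
  intros Hel T HT w. set (K := fvar_bound (fmap iota T)).
  assert (HK : sat (fun _ => 0%Z : Zstruct) (fclose K T))
    by (rewrite sat_fclose; intros; apply HT).
  apply Hel in HK. rewrite fmap_fclose, sat_fclose in HK.
  rewrite (sat_agree_below _ w (fun n => if n <? K then w n else iota 0%Z)).
  - apply HK. intros n Hn. destruct (Nat.ltb_spec n K); [lia|reflexivity].
  - intros n Hn. destruct (Nat.ltb_spec n K); [reflexivity|lia].
Qed.

(** * Parameters as variables *)

Section Abstraction.
Variable U : structure.
Variable iota : Z -> U.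

Fixpoint tabstract (K : nat) (t : term U) : term Zstruct * list U :=
  match t with
  | tvar n => (tvar n, nil)
  | tpar p => (tvar K, p :: nil)
  | tzero => (tzero, nil)
  | tadd t1 t2 =>
      let (a1, l1) := tabstract K t1 in
      let (a2, l2) := tabstract (K + length l1) t2 in
      (tadd a1 a2, l1 ++ l2)
  end.

Fixpoint fabstract (K : nat) (f : form U) : form Zstruct * list U :=
  match f with
  | feq t1 t2 =>
      let (a1, l1) := tabstract K t1 in
      let (a2, l2) := tabstract (K + length l1) t2 in
      (feq a1 a2, l1 ++ l2)
  | flt t1 t2 =>
      let (a1, l1) := tabstract K t1 in
      let (a2, l2) := tabstract (K + length l1) t2 in
      (flt a1 a2, l1 ++ l2)
  | fbot => (fbot, nil)
  | fneg g => let (a, l) := fabstract K g in (fneg a, l)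
  | fand g h =>
      let (a1, l1) := fabstract K g in
      let (a2, l2) := fabstract (K + length l1) h in
      (fand a1 a2, l1 ++ l2)
  | fex n g => let (a, l) := fabstract K g in (fex n a, l)
  end.

Definition lists_from (w : nat -> U) (K : nat) (l : list U) : Prop :=
  forall i, i < length l -> w (K + i) = nth i l (s0 U).

Lemma lists_from_app w K l1 l2 :
  lists_from w K (l1 ++ l2) -> lists_from w K l1 /\ lists_from w (K + length l1) l2.
Proof.
  intro H. split; intros i Hi.
  - rewrite H by (rewrite length_app; lia). now rewrite app_nth1.
  - rewrite <- Nat.add_assoc, H by (rewrite length_app; lia).
    rewrite app_nth2 by lia. f_equal. lia.
Qed.

Lemma tabstract_spec (t : term U) B K (v w : nat -> U) :
  tvar_bound t <= B -> B <= K -> (forall n, n < B -> w n = v n) ->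
  lists_from w K (snd (tabstract K t)) ->
  teval w (tmap iota (fst (tabstract K t))) = teval v t.
Proof.
  revert K; induction t; simpl; intros K Hb HK Hv Hl.
  - apply Hv; lia.
  - specialize (Hl 0 ltac:(simpl; lia)). now rewrite Nat.add_0_r in Hl.
  - reflexivity.
  - specialize (IHt1 K). specialize (IHt2 (K + length (snd (tabstract K t1)))).
    destruct (tabstract K t1) as [a1 l1]. simpl snd in *.
    destruct (tabstract (K + length l1) t2) as [a2 l2]. simpl in *.
    apply lists_from_app in Hl as [Hl1 Hl2].
    rewrite IHt1, IHt2; auto; lia.
Qed.

Lemma fabstract_spec (f : form U) B K (v w : nat -> U) :
  fvar_bound f <= B -> B <= K -> (forall n, n < B -> w n = v n) ->
  lists_from w K (snd (fabstract K f)) ->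
  (sat w (fmap iota (fst (fabstract K f))) <-> sat v f).
Proof.
  revert K v w; induction f; simpl; intros K v w Hb HK Hv Hl.
  1, 2: pose proof (tabstract_spec t1 B K v w) as E1;
    pose proof (tabstract_spec t2 B (K + length (snd (tabstract K t1))) v w) as E2;
    destruct (tabstract K t1) as [a1 l1]; simpl snd in *;
    destruct (tabstract (K + length l1) t2) as [a2 l2]; simpl in *;
    apply lists_from_app in Hl as [Hl1 Hl2];
    rewrite E1, E2; auto; try tauto; lia.
  - tauto.
  - specialize (IHf K v w). destruct (fabstract K f) as [a l]. simpl in *.
    rewrite IHf; auto; tauto.
  - specialize (IHf1 K v w). specialize (IHf2 (K + length (snd (fabstract K f1))) v w).
    destruct (fabstract K f1) as [a1 l1]. simpl snd in *.
    destruct (fabstract (K + length l1) f2) as [a2 l2]. simpl in *.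
    apply lists_from_app in Hl as [Hl1 Hl2].
    rewrite IHf1, IHf2; auto; try tauto; lia.
  - specialize (IHf K). destruct (fabstract K f) as [a l]. simpl in *.
    split; intros [x Hx]; exists x; revert Hx; apply IHf; try lia.
    1, 3: intros k Hk; unfold upd; destruct (Nat.eqb k n); auto; apply Hv; lia.
    1, 2: intros i Hi; rewrite upd_neq by lia; auto.
Qed.

Definition env_splice (K : nat) (v e : nat -> U) : nat -> U :=
  fun n => if n <? K then v n else e n.

Lemma env_splice_upd K (v e : nat -> U) n a :
  n < K -> env_splice K (upd v n a) e = upd (env_splice K v e) n a.
Proof.
  intro H. apply functional_extensionality; intro k. unfold env_splice, upd.
  destruct (Nat.eqb_spec k n), (Nat.ltb_spec k K); subst; auto; lia.
Qed.

(* The parameters of f become the variables K, K+1, ... of g, with values taken from e. *)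
Lemma abstract_parameters (f : form U) (K0 : nat) :
  exists (g : form Zstruct) (K : nat) (e : nat -> U), K0 <= K /\
    forall v, sat v f <-> sat (env_splice K v e) (fmap iota g).
Proof.
  set (K := max (fvar_bound f) K0).
  exists (fst (fabstract K f)), K, (fun n => nth (n - K) (snd (fabstract K f)) (s0 U)).
  split; [lia|]. intro v. symmetry. apply (fabstract_spec f K); try lia.
  - intros n Hn. unfold env_splice. destruct (Nat.ltb_spec n K); auto; lia.
  - intros i Hi. unfold env_splice. destruct (Nat.ltb_spec (K + i) K); [lia|].
    f_equal. lia.
Qed.

End Abstraction.

(** * Quantifier elimination and eventual periodicity in Presburger arithmetic *)

Section Presburger.
Local Open Scope Z_scope.

Definition env := nat -> Z.

(* Terms are kept semantic: any [env -> Z] that is affine in each variable. *)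
Definition affine (t : env -> Z) : Prop :=
  forall x, exists c, forall (v : env) a, t (upd v x a) = c * a + t (upd v x 0).

Lemma affine_ext t t' : (forall v, t v = t' v) -> affine t -> affine t'.
Proof. intros E H x. destruct (H x) as [c Hc]. exists c. intros. rewrite <- !E. apply Hc. Qed.

Lemma affine_const c : affine (fun _ => c).
Proof. intro x. exists 0. intros. lia. Qed.

Lemma affine_var n : affine (fun v => v n).
Proof.
  intro x. destruct (Nat.eq_dec x n) as [->|H].
  - exists 1. intros. rewrite !upd_eq. lia.
  - exists 0. intros. rewrite !upd_neq by auto. lia.
Qed.

Lemma affine_add t1 t2 : affine t1 -> affine t2 -> affine (fun v => t1 v + t2 v).
Proof.
  intros H1 H2 x. destruct (H1 x) as [c1 Hc1], (H2 x) as [c2 Hc2].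
  exists (c1 + c2). intros. rewrite Hc1, Hc2. lia.
Qed.

Lemma affine_scale k t : affine t -> affine (fun v => k * t v).
Proof. intros H x. destruct (H x) as [c Hc]. exists (k * c). intros. rewrite Hc. lia. Qed.

Lemma affine_lin k t1 t2 c :
  affine t1 -> affine t2 -> affine (fun v => k * t1 v + t2 v + c).
Proof.
  intros H1 H2. apply (affine_add (fun v => k * t1 v + t2 v)), affine_const.
  apply affine_add; auto. now apply affine_scale.
Qed.

Lemma affine_upd0 x t : affine t -> affine (fun v => t (upd v x 0)).
Proof.
  intros H y. destruct (Nat.eq_dec y x) as [->|Hne].
  - exists 0. intros. rewrite !upd_shadow. lia.
  - destruct (H y) as [c Hc]. exists c. intros v a.
    rewrite (upd_comm v y x a 0), Hc, (upd_comm v y x 0 0) by auto. reflexivity.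
Qed.

Lemma affine_teval (t : term Zstruct) : affine (fun v => @teval Zstruct v t).
Proof.
  induction t; simpl.
  - apply affine_var.
  - apply affine_const.
  - apply affine_const.
  - now apply (affine_add (fun v => @teval Zstruct v t1) (fun v => @teval Zstruct v t2)).
Qed.

Definition coef (t : env -> Z) (x : nat) : Z :=
  epsilon (inhabits 0) (fun c => forall (v : env) a, t (upd v x a) = c * a + t (upd v x 0)).

Lemma coef_spec t x : affine t ->
  forall (v : env) a, t (upd v x a) = coef t x * a + t (upd v x 0).
Proof. intro H. exact (epsilon_spec (inhabits 0) _ (H x)). Qed.

Lemma divide_add_mul_iff m D X k : (m | D) -> ((m | X + k * D) <-> (m | X)).
Proof.
  intro H. split; intro H'.
  - replace X with (X + k * D - k * D) by ring.
    apply Z.divide_sub_r; auto. now apply Z.divide_mul_r.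
  - apply Z.divide_add_r; auto. now apply Z.divide_mul_r.
Qed.

Lemma divide_prod_l a b D : (a * b | D) -> (a | D).
Proof. apply Z.divide_trans, Z.divide_factor_l. Qed.

Lemma divide_prod_r a b D : (a * b | D) -> (b | D).
Proof. apply Z.divide_trans, Z.divide_factor_r. Qed.

Inductive qf :=
| QTrue | QFalse
| QLt (t : env -> Z)
| QDvd (m : Z) (t : env -> Z)
| QNDvd (m : Z) (t : env -> Z)
| QAnd (p q : qf) | QOr (p q : qf).

Fixpoint qf_holds (p : qf) (v : env) : Prop :=
  match p with
  | QTrue => True
  | QFalse => False
  | QLt t => t v < 0
  | QDvd m t => (m | t v)
  | QNDvd m t => ~ (m | t v)
  | QAnd p q => qf_holds p v /\ qf_holds q v
  | QOr p q => qf_holds p v \/ qf_holds q v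
  end.

Fixpoint qf_wf (p : qf) : Prop :=
  match p with
  | QTrue | QFalse => True
  | QLt t => affine t
  | QDvd m t | QNDvd m t => m <> 0 /\ affine t
  | QAnd p q | QOr p q => qf_wf p /\ qf_wf q
  end.

Fixpoint qf_not (p : qf) : qf :=
  match p with
  | QTrue => QFalse
  | QFalse => QTrue
  | QLt t => QLt (fun v => - t v - 1)
  | QDvd m t => QNDvd m t
  | QNDvd m t => QDvd m t
  | QAnd p q => QOr (qf_not p) (qf_not q)
  | QOr p q => QAnd (qf_not p) (qf_not q)
  end.

Lemma qf_holds_not p v : qf_holds (qf_not p) v <-> ~ qf_holds p v.
Proof. induction p; simpl; try rewrite IHp1, IHp2; try tauto; lia. Qed.

Lemma qf_wf_not p : qf_wf p -> qf_wf (qf_not p).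
Proof.
  induction p; simpl; try tauto.
  intro H. apply (affine_ext (fun v => -1 * t v + 0 + -1)); [intro; lia|].
  now apply affine_lin, affine_const.
Qed.

Fixpoint qf_period (p : qf) : Z :=
  match p with
  | QDvd m _ | QNDvd m _ => Z.abs m
  | QAnd p q | QOr p q => qf_period p * qf_period q
  | _ => 1
  end.

Lemma qf_period_pos p : qf_wf p -> 0 < qf_period p.
Proof. induction p; simpl; intros; try lia; destruct H; apply Z.mul_pos_pos; auto. Qed.

Definition same_far_side (b a a' : Z) : Prop := (b < a /\ b < a') \/ (a < -b /\ a' < -b).

Lemma same_far_side_mono b b' a a' : b <= b' -> same_far_side b' a a' -> same_far_side b a a'.
Proof. unfold same_far_side. lia. Qed.

Lemma lt0_far_invariant c r a a' :
  same_far_side (Z.abs r) a a' -> (c * a + r < 0 <-> c * a' + r < 0).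
Proof.
  unfold same_far_side. intros [[Ha Ha']|[Ha Ha']];
    destruct (Z.lt_trichotomy c 0) as [Hc|[->|Hc]]; try (subst; simpl; lia).
  - assert (c * a <= - a) by nia. assert (c * a' <= - a') by nia. lia.
  - assert (c * a >= a) by nia. assert (c * a' >= a') by nia. lia.
  - assert (c * a >= - a) by nia. assert (c * a' >= - a') by nia. lia.
  - assert (c * a <= a) by nia. assert (c * a' <= a') by nia. lia.
Qed.

Lemma dvd_period_invariant m D c X a a' :
  (Z.abs m | D) -> (D | a' - a) -> ((m | c * a' + X) <-> (m | c * a + X)).
Proof.
  intros Hm [k Hk]. rewrite Z.divide_abs_l in Hm.
  replace (c * a' + X) with (c * a + X + (c * k) * D) by (rewrite <- Z.mul_assoc, <- Hk; ring).
  now apply divide_add_mul_iff.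
Qed.

Lemma qf_eventually_periodic p x D : qf_wf p -> (qf_period p | D) ->
  forall v, exists b, 0 <= b /\ forall a a', same_far_side b a a' -> (D | a' - a) ->
    (qf_holds p (upd v x a) <-> qf_holds p (upd v x a')).
Proof.
  revert D; induction p; simpl; intros D Hw HD v.
  1, 2: exists 0; split; [lia | tauto].
  { exists (Z.abs (t (upd v x 0))). split; [lia|]. intros a a' Ha _.
    rewrite (coef_spec t x Hw v a), (coef_spec t x Hw v a'). now apply lt0_far_invariant. }
  1, 2: exists 0; split; [lia|]; intros a a' _ Hd;
    rewrite (coef_spec t x (proj2 Hw) v a), (coef_spec t x (proj2 Hw) v a'),
      (dvd_period_invariant m D _ _ a a') by auto;
    reflexivity.
  1, 2: destruct Hw as [Hw1 Hw2];
    destruct (IHp1 D Hw1 (divide_prod_l _ _ _ HD) v) as [b1 [Hb1 H1]];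
    destruct (IHp2 D Hw2 (divide_prod_r _ _ _ HD) v) as [b2 [Hb2 H2]];
    exists (Z.max b1 b2); split; [lia|]; intros a a' Ha Hd;
    rewrite (H1 a a'), (H2 a a'); try reflexivity; auto;
    revert Ha; apply same_far_side_mono; lia.
Qed.

(* Cooper's normal form for eliminating one variable a: order atoms are [s * a + r < 0]
   with s in {-1, 0, 1}.  [uqf_minf p] is the limit of [p] as a -> -oo and [uqf_bounds p]
   collects the lower bounds r coming from the atoms -a + r < 0. *)
Inductive uqf :=
| UTrue | UFalse
| ULt (s : Z) (r : env -> Z)
| UDvd (m s : Z) (r : env -> Z)
| UNDvd (m s : Z) (r : env -> Z)
| UAnd (p q : uqf) | UOr (p q : uqf).

Fixpoint uqf_holds (p : uqf) (v : env) (a : Z) : Prop :=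
  match p with
  | UTrue => True
  | UFalse => False
  | ULt s r => s * a + r v < 0
  | UDvd m s r => (m | s * a + r v)
  | UNDvd m s r => ~ (m | s * a + r v)
  | UAnd p q => uqf_holds p v a /\ uqf_holds q v a
  | UOr p q => uqf_holds p v a \/ uqf_holds q v a
  end.

Fixpoint uqf_wf (p : uqf) : Prop :=
  match p with
  | UTrue | UFalse => True
  | ULt s r => -1 <= s <= 1 /\ affine r
  | UDvd m _ r | UNDvd m _ r => m <> 0 /\ affine r
  | UAnd p q | UOr p q => uqf_wf p /\ uqf_wf q
  end.

Fixpoint uqf_period (p : uqf) : Z :=
  match p with
  | UDvd m _ _ | UNDvd m _ _ => Z.abs m
  | UAnd p q | UOr p q => uqf_period p * uqf_period q
  | _ => 1
  end.

Lemma uqf_period_pos p : uqf_wf p -> 0 < uqf_period p.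
Proof. induction p; simpl; intros; try lia; destruct H; apply Z.mul_pos_pos; auto. Qed.

Fixpoint uqf_minf (p : uqf) : uqf :=
  match p with
  | ULt s r => if 0 <? s then UTrue else if s <? 0 then UFalse else ULt 0 r
  | UAnd p q => UAnd (uqf_minf p) (uqf_minf q)
  | UOr p q => UOr (uqf_minf p) (uqf_minf q)
  | p => p
  end.

Fixpoint uqf_bounds (p : uqf) : list (env -> Z) :=
  match p with
  | ULt s r => if s =? -1 then r :: nil else nil
  | UAnd p q | UOr p q => uqf_bounds p ++ uqf_bounds q
  | _ => nil
  end.

Lemma uqf_minf_eventually p : uqf_wf p -> forall v, exists z, forall a, a < z ->
  (uqf_holds p v a <-> uqf_holds (uqf_minf p) v a).
Proof.
  induction p; simpl; intros Hw v.
  1, 2, 4, 5: exists 0; tauto.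
  { assert (s = -1 \/ s = 0 \/ s = 1) as [-> | [-> | ->]] by lia;
      cbn -[Z.mul Z.abs]; exists (- Z.abs (r v)); intros; lia. }
  1, 2: destruct Hw as [H1 H2]; destruct (IHp1 H1 v) as [z1 Hz1];
    destruct (IHp2 H2 v) as [z2 Hz2]; exists (Z.min z1 z2);
    intros a Ha; rewrite Hz1, Hz2 by lia; tauto.
Qed.

Lemma uqf_minf_periodic p D : (uqf_period p | D) ->
  forall v a k, uqf_holds (uqf_minf p) v a <-> uqf_holds (uqf_minf p) v (a + k * D).
Proof.
  induction p; simpl; intros HD v a k.
  1, 2: tauto.
  { destruct (Z.ltb_spec 0 s); [|destruct (Z.ltb_spec s 0)]; simpl; lia. }
  1, 2: rewrite (dvd_period_invariant m D s (r v) a (a + k * D)); auto;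
    [reflexivity | exists k; ring].
  1, 2: rewrite (IHp1 (divide_prod_l _ _ _ HD) v a k), (IHp2 (divide_prod_r _ _ _ HD) v a k);
    reflexivity.
Qed.

Lemma uqf_step_down p D : uqf_wf p -> 0 < D -> (uqf_period p | D) -> forall v a,
  (forall b, In b (uqf_bounds p) -> forall j, 1 <= j <= D -> a <> b v + j) ->
  uqf_holds p v a -> uqf_holds p v (a - D).
Proof.
  induction p; simpl; intros Hw HD0 HD v a Hb Ha; auto.
  { destruct (Z.eqb_spec s (-1)) as [-> | Hs].
    - specialize (Hb r (or_introl eq_refl) (a - r v)). lia.
    - assert (s = 0 \/ s = 1) as [-> | ->] by lia; lia. }
  1, 2: rewrite (dvd_period_invariant m D s (r v) a (a - D)); auto; exists (-1); ring.
  all: destruct Hw as [H1 H2].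
  all: assert (Hb1 : forall b, In b (uqf_bounds p1) -> forall j, 1 <= j <= D -> a <> b v + j)
         by (intros b Hb'; apply Hb, in_or_app; auto).
  all: assert (Hb2 : forall b, In b (uqf_bounds p2) -> forall j, 1 <= j <= D -> a <> b v + j)
         by (intros b Hb'; apply Hb, in_or_app; auto).
  all: pose proof (IHp1 H1 HD0 (divide_prod_l _ _ _ HD) v a Hb1).
  all: pose proof (IHp2 H2 HD0 (divide_prod_r _ _ _ HD) v a Hb2).
  all: tauto.
Qed.

Definition uqf_witness (p : uqf) (v : env) (j : Z) : Prop :=
  uqf_holds (uqf_minf p) v j \/ exists b, In b (uqf_bounds p) /\ uqf_holds p v (b v + j).

Lemma uqf_holds_witness p v a : uqf_wf p -> uqf_holds p v a ->
  exists j, 1 <= j <= uqf_period p /\ uqf_witness p v j.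
Proof.
  intros Hw Ha. set (D := uqf_period p). pose proof (uqf_period_pos p Hw) as HD.
  destruct (classic (exists j, 1 <= j <= D /\
    exists b, In b (uqf_bounds p) /\ uqf_holds p v (b v + j))) as [[j [Hj Hb]]|Hno].
  { exists j. split; [exact Hj | right; exact Hb]. }
  (* With no bound point in reach, p is stable under a |-> a - D, hence holds near -oo. *)
  assert (Hdown : forall n : nat, uqf_holds p v (a - Z.of_nat n * D)).
  { induction n.
    - now replace (a - Z.of_nat 0 * D) with a by lia.
    - replace (a - Z.of_nat (S n) * D) with (a - Z.of_nat n * D - D) by lia.
      apply uqf_step_down; auto using Z.divide_refl.
      intros b Hb j Hj E. apply Hno. exists j. split; auto. exists b. split; auto.
      now rewrite <- E. }
  destruct (uqf_minf_eventually p Hw v) as [z Hz].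
  set (n := Z.to_nat (Z.abs a + Z.abs z + 1)).
  pose proof (Z.mod_pos_bound (a - 1) D HD). pose proof (Z.div_mod (a - 1) D ltac:(lia)).
  exists ((a - 1) mod D + 1). split; [lia | left].
  rewrite (uqf_minf_periodic p D (Z.divide_refl _) v _ ((a - 1) / D - Z.of_nat n)).
  replace ((a - 1) mod D + 1 + ((a - 1) / D - Z.of_nat n) * D)
    with (a - Z.of_nat n * D) by lia.
  apply Hz, Hdown. unfold n. rewrite Z2Nat.id by lia. nia.
Qed.

Lemma uqf_exists_iff p v : uqf_wf p ->
  (exists a, uqf_holds p v a) <-> exists j, 1 <= j <= uqf_period p /\ uqf_witness p v j.
Proof.
  intro Hw. split.
  - intros [a Ha]. exact (uqf_holds_witness p v a Hw Ha).
  - intros [j [Hj [Hm|[b [_ Hb]]]]]; [|eauto].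
    destruct (uqf_minf_eventually p Hw v) as [z Hz]. pose proof (uqf_period_pos p Hw).
    exists (j + (- (Z.abs j + Z.abs z + 1)) * uqf_period p).
    apply Hz; [nia|]. now apply uqf_minf_periodic.
Qed.

Definition coef_abs (c : Z) : Z := if c =? 0 then 1 else Z.abs c.
Definition coef_cofactor (M c : Z) : Z := if c =? 0 then 1 else M / Z.abs c.

Lemma coef_cofactor_spec M c a r : 0 < M -> (coef_abs c | M) ->
  0 < coef_cofactor M c /\
  Z.sgn c * (M * a) + coef_cofactor M c * r = coef_cofactor M c * (c * a + r).
Proof.
  intros HM Hd. unfold coef_cofactor, coef_abs in *. destruct (Z.eqb_spec c 0) as [->|Hc].
  - simpl. lia.
  - destruct Hd as [q ->]. rewrite Z.div_mul by lia.
    destruct (Z.lt_trichotomy c 0) as [Hn|[H0|Hp]]; [|lia|].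
    + rewrite Z.sgn_neg, Z.abs_neq in * by lia. split; [nia | ring].
    + rewrite Z.sgn_pos, Z.abs_eq in * by lia. split; [nia | ring].
Qed.

Lemma Z_sgn_bound c : -1 <= Z.sgn c <= 1.
Proof. destruct c; simpl; lia. Qed.

Fixpoint qf_coef_prod (x : nat) (p : qf) : Z :=
  match p with
  | QLt t | QDvd _ t | QNDvd _ t => coef_abs (coef t x)
  | QAnd p q | QOr p q => qf_coef_prod x p * qf_coef_prod x q
  | _ => 1
  end.

Lemma qf_coef_prod_pos x p : 0 < qf_coef_prod x p.
Proof.
  induction p; simpl; try lia; try (apply Z.mul_pos_pos; auto);
    unfold coef_abs; destruct (Z.eqb_spec (coef t x) 0); lia.
Qed.

(* Each atom is scaled so that x gets coefficient +-M, a common multiple of the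
   coefficients; then M * x is renamed a (subject to M | a). *)
Fixpoint qf_unitize (x : nat) (M : Z) (p : qf) : uqf :=
  match p with
  | QTrue => UTrue
  | QFalse => UFalse
  | QLt t =>
      ULt (Z.sgn (coef t x)) (fun v => coef_cofactor M (coef t x) * t (upd v x 0))
  | QDvd m t =>
      UDvd (coef_cofactor M (coef t x) * m) (Z.sgn (coef t x))
           (fun v => coef_cofactor M (coef t x) * t (upd v x 0))
  | QNDvd m t =>
      UNDvd (coef_cofactor M (coef t x) * m) (Z.sgn (coef t x))
            (fun v => coef_cofactor M (coef t x) * t (upd v x 0))
  | QAnd p q => UAnd (qf_unitize x M p) (qf_unitize x M q)
  | QOr p q => UOr (qf_unitize x M p) (qf_unitize x M q)
  end.

Lemma qf_unitize_spec x p M : qf_wf p -> 0 < M -> (qf_coef_prod x p | M) ->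
  forall v a, uqf_holds (qf_unitize x M p) v (M * a) <-> qf_holds p (upd v x a).
Proof.
  revert M; induction p; simpl; intros M Hw HM Hd v a; try tauto.
  1-3: assert (Ht : affine t) by (try apply Hw; apply (proj2 Hw));
    destruct (coef_cofactor_spec M (coef t x) a (t (upd v x 0)) HM Hd) as [Hk ->];
    rewrite (coef_spec t x Ht v a).
  { split; intro; nia. }
  { apply Z.mul_divide_cancel_l. lia. }
  { rewrite Z.mul_divide_cancel_l by lia. reflexivity. }
  all: destruct Hw as [H1 H2];
    rewrite (IHp1 M H1 HM (divide_prod_l _ _ _ Hd)), (IHp2 M H2 HM (divide_prod_r _ _ _ Hd));
    reflexivity.
Qed.

Lemma qf_unitize_wf x p M : qf_wf p -> 0 < M -> (qf_coef_prod x p | M) ->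
  uqf_wf (qf_unitize x M p).
Proof.
  revert M; induction p; simpl; intros M Hw HM Hd; auto.
  { split; [apply Z_sgn_bound | now apply affine_scale, affine_upd0]. }
  1, 2: destruct Hw as [Hm Hw];
    destruct (coef_cofactor_spec M (coef t x) 0 0 HM Hd) as [Hk _];
    split; [nia | now apply affine_scale, affine_upd0].
  1, 2: destruct Hw; split; [apply IHp1 | apply IHp2]; eauto using divide_prod_l, divide_prod_r.
Qed.

Lemma qf_exists_as_uqf p x : qf_wf p -> exists psi, uqf_wf psi /\
  forall v, (exists a, qf_holds p (upd v x a)) <-> exists a, uqf_holds psi v a.
Proof.
  intro Hw. set (M := qf_coef_prod x p). pose proof (qf_coef_prod_pos x p) as HM.
  exists (UAnd (UDvd M 1 (fun _ => 0)) (qf_unitize x M p)). split.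
  - cbn [uqf_wf]. split; [split; [lia | apply affine_const] | apply qf_unitize_wf; auto].
    apply Z.divide_refl.
  - intro v. cbn [uqf_holds]. split.
    + intros [a Ha]. exists (M * a). split; [exists a; ring|].
      apply qf_unitize_spec; auto. apply Z.divide_refl.
    + intros [a [[q Hq] Ha]]. exists q. replace a with (M * q) in Ha by lia.
      rewrite <- qf_unitize_spec; eauto. apply Z.divide_refl.
Qed.

Fixpoint uqf_subst (p : uqf) (b : env -> Z) (j : Z) : qf :=
  match p with
  | UTrue => QTrue
  | UFalse => QFalse
  | ULt s r => QLt (fun v => s * (b v + j) + r v)
  | UDvd m s r => QDvd m (fun v => s * (b v + j) + r v)
  | UNDvd m s r => QNDvd m (fun v => s * (b v + j) + r v)
  | UAnd p q => QAnd (uqf_subst p b j) (uqf_subst q b j)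
  | UOr p q => QOr (uqf_subst p b j) (uqf_subst q b j)
  end.

Lemma uqf_subst_holds p b j v : qf_holds (uqf_subst p b j) v <-> uqf_holds p v (b v + j).
Proof. induction p; simpl; try rewrite IHp1, IHp2; tauto. Qed.

Lemma uqf_subst_wf p b j : uqf_wf p -> affine b -> qf_wf (uqf_subst p b j).
Proof.
  intros Hw Hb.
  assert (Hl : forall s r, affine r -> affine (fun v => s * (b v + j) + r v)).
  { intros s r Hr. apply (affine_ext (fun v => s * b v + r v + s * j)); [intro; ring|].
    now apply affine_lin. }
  induction p; simpl in *; intuition auto.
Qed.

Definition qf_any (l : list qf) : qf := fold_right QOr QFalse l.

Lemma qf_any_map_holds {A : Type} (F : A -> qf) l v :
  qf_holds (qf_any (map F l)) v <-> exists y, In y l /\ qf_holds (F y) v.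
Proof.
  induction l as [|y l IH]; simpl; [firstorder|].
  rewrite IH. split; [intros [H|[z [Hz H]]]; eauto | intros [z [[<-|Hz] H]]; eauto].
Qed.

Lemma qf_any_map_wf {A : Type} (F : A -> qf) l :
  (forall y, In y l -> qf_wf (F y)) -> qf_wf (qf_any (map F l)).
Proof. induction l; simpl; auto. Qed.

Definition Z_range1 (D : Z) : list Z := map (fun i => Z.of_nat i + 1) (seq 0 (Z.to_nat D)).

Lemma in_Z_range1 D j : In j (Z_range1 D) <-> 1 <= j <= D.
Proof.
  unfold Z_range1. rewrite in_map_iff. split.
  - intros [i [<- Hi]]. apply in_seq in Hi. lia.
  - intro Hj. exists (Z.to_nat (j - 1)). split; [lia | apply in_seq; lia].
Qed.

Lemma uqf_minf_wf p : uqf_wf p -> uqf_wf (uqf_minf p).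
Proof.
  induction p; simpl; try tauto.
  intros [Hs Hr]. destruct (0 <? s), (s <? 0); simpl; auto. split; [lia | exact Hr].
Qed.

Lemma uqf_bounds_affine p b : uqf_wf p -> In b (uqf_bounds p) -> affine b.
Proof.
  induction p; simpl; try tauto; intros Hw Hb.
  { destruct (s =? -1); simpl in Hb; [destruct Hb as [<-|[]]|]; tauto. }
  all: apply in_app_or in Hb; tauto.
Qed.

Lemma uqf_exists_elim psi : uqf_wf psi -> exists P, qf_wf P /\
  forall v, (exists a, uqf_holds psi v a) <-> qf_holds P v.
Proof.
  intro Hw.
  set (witness j := QOr (uqf_subst (uqf_minf psi) (fun _ => 0) j)
                        (qf_any (map (fun b => uqf_subst psi b j) (uqf_bounds psi)))).
  exists (qf_any (map witness (Z_range1 (uqf_period psi)))). split.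
  - apply qf_any_map_wf. intros j _. simpl. split.
    + apply uqf_subst_wf; [apply uqf_minf_wf, Hw | apply affine_const].
    + apply qf_any_map_wf. intros b Hb. apply uqf_subst_wf; auto.
      now apply uqf_bounds_affine with psi.
  - intro v. rewrite uqf_exists_iff, qf_any_map_holds by exact Hw.
    unfold uqf_witness, witness. simpl. setoid_rewrite in_Z_range1.
    setoid_rewrite qf_any_map_holds. setoid_rewrite uqf_subst_holds. simpl. reflexivity.
Qed.

Lemma qf_exists_elim p x : qf_wf p -> exists P, qf_wf P /\
  forall v, (exists a, qf_holds p (upd v x a)) <-> qf_holds P v.
Proof.
  intro Hw. destruct (qf_exists_as_uqf p x Hw) as [psi [Hpsi E1]].
  destruct (uqf_exists_elim psi Hpsi) as [P [HP E2]].
  exists P. split; [exact HP|]. intro v. now rewrite E1, E2.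
Qed.

Lemma qf_lt_teval (t1 t2 : term Zstruct) (c : Z) :
  qf_wf (QLt (fun v => @teval Zstruct v t1 - @teval Zstruct v t2 + c)).
Proof.
  simpl. apply (affine_ext (fun v => -1 * @teval Zstruct v t2 + @teval Zstruct v t1 + c));
    [intro; ring|]. apply affine_lin; apply affine_teval.
Qed.

Theorem presburger_qe (f : form Zstruct) :
  exists p, qf_wf p /\ forall v : env, @sat Zstruct v f <-> qf_holds p v.
Proof.
  induction f.
  - exists (QAnd (QLt (fun v => @teval Zstruct v t1 - @teval Zstruct v t2 + -1))
                 (QLt (fun v => @teval Zstruct v t2 - @teval Zstruct v t1 + -1))).
    split; [split; apply qf_lt_teval|]. intro v. simpl. lia.
  - exists (QLt (fun v => @teval Zstruct v t1 - @teval Zstruct v t2 + 0)).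
    split; [apply qf_lt_teval|]. intro v. simpl. lia.
  - exists QFalse. simpl. tauto.
  - destruct IHf as [p [Hw Hp]]. exists (qf_not p). split; [now apply qf_wf_not|].
    intro v. rewrite qf_holds_not. simpl. now rewrite Hp.
  - destruct IHf1 as [p [Hw Hp]], IHf2 as [q [Hwq Hq]]. exists (QAnd p q).
    split; [simpl; tauto|]. intro v. simpl. now rewrite Hp, Hq.
  - destruct IHf as [p [Hw Hp]], (qf_exists_elim p n Hw) as [P [HP HPe]].
    exists P. split; [exact HP|]. intro v. rewrite <- HPe. simpl.
    split; intros [a Ha]; exists a; apply Hp; auto.
Qed.

Theorem Z_eventually_periodic (f : form Zstruct) (y : nat) :
  exists N : nat, (0 < N)%nat /\ forall v : env, exists b, 0 <= b /\
    forall a a', same_far_side b a a' -> (Z.of_nat N | a' - a) ->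
      (@sat Zstruct (upd v y a) f <-> @sat Zstruct (upd v y a') f).
Proof.
  destruct (presburger_qe f) as [p [Hw Hp]]. pose proof (qf_period_pos p Hw).
  exists (Z.to_nat (qf_period p)). split; [lia|]. intro v.
  destruct (qf_eventually_periodic p y (qf_period p) Hw (Z.divide_refl _) v) as [b [Hb Hper]].
  exists b. split; [exact Hb|]. intros a a' Ha Hd. rewrite !Hp.
  apply Hper; [exact Ha|]. now rewrite Z2Nat.id in Hd by lia.
Qed.

End Presburger.

(** * Congruence classes and eventual periodicity in U *)

Fixpoint tnmul {P : Type} (N : nat) (t : term P) : term P :=
  match N with O => tzero | S n => tadd t (tnmul n t) end.

Fixpoint nmul {M : structure} (N : nat) (q : M) : M :=
  match N with O => s0 M | S n => sadd M q (nmul n q) end.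

Lemma teval_tnmul {M : structure} (v : nat -> M) N t : teval v (tnmul N t) = nmul N (teval v t).
Proof. induction N; simpl; congruence. Qed.

Lemma nmul_Z N (q : Z) : @nmul Zstruct N q = (Z.of_nat N * q)%Z.
Proof. induction N; [reflexivity|]. change (q + @nmul Zstruct N q = Z.of_nat (S N) * q)%Z. lia. Qed.

Lemma tmap_tnmul {P Q : Type} (i : P -> Q) N t : tmap i (tnmul N t) = tnmul N (tmap i t).
Proof. induction N; simpl; congruence. Qed.

Definition fcong {P : Type} (c : P) (N z q : nat) : form P :=
  fex q (feq (tvar z) (tadd (tnmul N (tvar q)) (tpar c))).

Definition is_cong {M : structure} (N : nat) (c a : M) : Prop :=
  exists k, a = sadd M (nmul N k) c.

Lemma fmap_fcong {P Q : Type} (i : P -> Q) c N z q : fmap i (fcong c N z q) = fcong (i c) N z q.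
Proof. unfold fcong. simpl. now rewrite tmap_tnmul. Qed.

Lemma sat_fcong {M : structure} (v : nat -> M) c N z q :
  q <> z -> (sat v (fcong c N z q) <-> is_cong N c (v z)).
Proof.
  intro H. unfold fcong, is_cong. simpl. setoid_rewrite teval_tnmul. simpl.
  split; intros [k Hk]; exists k; rewrite upd_eq, upd_neq in *; auto.
Qed.

Lemma is_cong_Z N (c a : Z) : @is_cong Zstruct N c a <-> exists k, a = (Z.of_nat N * k + c)%Z.
Proof. unfold is_cong. now setoid_rewrite nmul_Z. Qed.

Definition beyond {M : structure} (sg : bool) (b a : M) : Prop :=
  if sg then slt M b a else slt M a b.

Definition fbeyond {P : Type} (sg : bool) (t1 t2 : term P) : form P :=
  if sg then flt t1 t2 else flt t2 t1.

Lemma fmap_fbeyond {P Q : Type} (i : P -> Q) sg t1 t2 :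
  fmap i (fbeyond sg t1 t2) = fbeyond sg (tmap i t1) (tmap i t2).
Proof. now destruct sg. Qed.

Lemma sat_fbeyond {M : structure} (v : nat -> M) sg t1 t2 :
  sat v (fbeyond sg t1 t2) <-> beyond sg (teval v t1) (teval v t2).
Proof. now destruct sg. Qed.

Definition fsubst1 {P : Type} (A : nat) (g : form P) : form P :=
  fex 1 (fand (feq (tvar 1) (tvar A)) g).

Lemma sat_fsubst1 {M : structure} (v : nat -> M) A g :
  A <> 1 -> (sat v (fsubst1 A g) <-> sat (upd v 1 (v A)) g).
Proof.
  intro H. unfold fsubst1. simpl. split.
  - intros [a [Ha Hg]]. rewrite upd_eq, upd_neq in Ha by auto. now subst.
  - intro Hg. exists (v A). rewrite upd_eq, upd_neq by auto. auto.
Qed.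

Fixpoint fbigAnd {P : Type} (n : nat) (F : nat -> form P) : form P :=
  match n with O => fneg fbot | S n => fand (fbigAnd n F) (F n) end.

Fixpoint fbigOr {P : Type} (n : nat) (F : nat -> form P) : form P :=
  match n with O => fbot | S n => fOr (fbigOr n F) (F n) end.

Lemma fmap_fbigAnd {P Q : Type} (i : P -> Q) n F :
  fmap i (fbigAnd n F) = fbigAnd n (fun j => fmap i (F j)).
Proof. induction n; simpl; congruence. Qed.

Lemma fmap_fbigOr {P Q : Type} (i : P -> Q) n F :
  fmap i (fbigOr n F) = fbigOr n (fun j => fmap i (F j)).
Proof. induction n; simpl; [|rewrite IHn]; reflexivity. Qed.

Lemma sat_fbigAnd {M : structure} (v : nat -> M) n F :
  sat v (fbigAnd n F) <-> forall j, j < n -> sat v (F j).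
Proof.
  induction n; simpl; [split; intros; [lia | tauto]|].
  rewrite IHn. split; [|auto].
  intros [H1 H2] j Hj. destruct (Nat.eq_dec j n); subst; auto. apply H1; lia.
Qed.

Lemma sat_fbigOr {M : structure} (v : nat -> M) n F :
  sat v (fbigOr n F) <-> exists j, j < n /\ sat v (F j).
Proof.
  induction n; [simpl; split; [tauto | intros [j [Hj _]]; lia]|].
  change (sat v (fOr (fbigOr n F) (F n)) <-> exists j, j < S n /\ sat v (F j)).
  rewrite sat_fOr, IHn. split.
  - intros [[j [Hj H]]|H]; [exists j | exists n]; split; auto.
  - intros [j [Hj H]]. destruct (Nat.eq_dec j n); subst; auto. left; exists j; split; auto; lia.
Qed.

Lemma tfv_in_tnmul {P : Type} (S : nat -> Prop) N (t : term P) : tfv_in S t -> tfv_in S (tnmul N t).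
Proof. induction N; simpl; auto. Qed.

Lemma tpar_in_tnmul {P : Type} (C : P -> Prop) N (t : term P) :
  tpar_in C t -> tpar_in C (tnmul N t).
Proof. induction N; simpl; auto. Qed.

Section TransferredFacts.
Variable U : structure.
Variable iota : Z -> U.
Hypothesis Hel : elementary_emb Zstruct U iota.

Definition cong_class (N j : nat) (a : U) : Prop := is_cong N (iota (Z.of_nat j)) a.

Lemma beyond_trans sg (b c a : U) : beyond sg b c -> beyond sg c a -> beyond sg b a.
Proof.
  set (T := @fimp Zstruct (fand (fbeyond sg (tvar 0) (tvar 1)) (fbeyond sg (tvar 1) (tvar 2)))
                         (fbeyond sg (tvar 0) (tvar 2))).
  assert (HZ : forall v : nat -> Zstruct, sat v T).
  { intro v. unfold T. rewrite sat_fimp, sat_fand, !sat_fbeyond. destruct sg; simpl; lia. }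
  pose proof (elementary_valid U iota Hel T HZ
    (fun n => match n with 0 => b | 1 => c | _ => a end)) as H.
  unfold T in H. rewrite fmap_fimp, fmap_fand, !fmap_fbeyond, sat_fimp, sat_fand, !sat_fbeyond in H.
  exact (fun H1 H2 => H (conj H1 H2)).
Qed.

Lemma beyond_common sg (b1 b2 : U) : exists c, beyond sg b1 c /\ beyond sg b2 c.
Proof.
  set (T := @fex Zstruct 2 (fand (fbeyond sg (tvar 0) (tvar 2)) (fbeyond sg (tvar 1) (tvar 2)))).
  assert (HZ : forall v : nat -> Zstruct, sat v T).
  { intro v. unfold T. rewrite sat_fex. setoid_rewrite sat_fand. setoid_rewrite sat_fbeyond.
    destruct sg; simpl.
    - exists (Z.max (v 0%nat) (v 1%nat) + 1)%Z. upd_simpl. lia.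
    - exists (Z.min (v 0%nat) (v 1%nat) - 1)%Z. upd_simpl. lia. }
  pose proof (elementary_valid U iota Hel T HZ (fun n => match n with 0 => b1 | _ => b2 end)) as H.
  unfold T in H. rewrite fmap_fex, fmap_fand, !fmap_fbeyond, sat_fex in H.
  destruct H as [c Hc]. rewrite sat_fand, !sat_fbeyond in Hc. exists c. exact Hc.
Qed.

Lemma beyond_cong_class_exists sg N j (b : U) :
  0 < N -> exists a, beyond sg b a /\ cong_class N j a.
Proof.
  intro HN.
  set (T := @fex Zstruct 1 (fand (fbeyond sg (tvar 0) (tvar 1)) (fcong (Z.of_nat j) N 1 2))).
  assert (HZ : forall v : nat -> Zstruct, sat v T).
  { intro v. unfold T. rewrite sat_fex. setoid_rewrite sat_fand. setoid_rewrite sat_fbeyond.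
    setoid_rewrite sat_fcong; [|lia]. setoid_rewrite is_cong_Z.
    set (k := (Z.abs (v 0%nat) + Z.of_nat j + 1)%Z).
    destruct sg; simpl.
    - exists (Z.of_nat N * k + Z.of_nat j)%Z. upd_simpl. split; [nia | eauto].
    - exists (Z.of_nat N * - k + Z.of_nat j)%Z. upd_simpl. split; [nia | eauto]. }
  pose proof (elementary_valid U iota Hel T HZ (fun _ => b)) as H.
  unfold T in H. rewrite fmap_fex, fmap_fand, fmap_fbeyond, fmap_fcong, sat_fex in H.
  destruct H as [a Ha]. rewrite sat_fand, sat_fbeyond, sat_fcong in Ha by lia.
  simpl in Ha. rewrite upd_eq in Ha. exists a. exact Ha.
Qed.

Lemma cong_class_exists N (a : U) : 0 < N -> exists j, j < N /\ cong_class N j a.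
Proof.
  intro HN.
  set (T := @fbigOr Zstruct N (fun j => fcong (Z.of_nat j) N 0 1)).
  assert (HZ : forall v : nat -> Zstruct, sat v T).
  { intro v. unfold T. rewrite sat_fbigOr. exists (Z.to_nat (v 0%nat mod Z.of_nat N)).
    pose proof (Z.mod_pos_bound (v 0%nat) (Z.of_nat N) ltac:(lia)).
    rewrite sat_fcong, is_cong_Z by lia. split; [lia|].
    exists (v 0%nat / Z.of_nat N)%Z. rewrite Z2Nat.id by lia. apply Z.div_mod. lia. }
  pose proof (elementary_valid U iota Hel T HZ (fun _ => a)) as H.
  unfold T in H. rewrite fmap_fbigOr, sat_fbigOr in H. destruct H as [j [Hj H]].
  rewrite fmap_fcong, sat_fcong in H by lia. exists j. split; auto.
Qed.

Lemma cong_class_unique N j j' (a : U) :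
  j < N -> j' < N -> cong_class N j a -> cong_class N j' a -> j = j'.
Proof.
  intros Hj Hj' H1 H2. apply NNPP. intro Hne.
  set (T := @fneg Zstruct (fand (fcong (Z.of_nat j) N 0 1) (fcong (Z.of_nat j') N 0 1))).
  assert (HZ : forall v : nat -> Zstruct, sat v T).
  { intro v. unfold T.
    change (~ sat v (fand (fcong (Z.of_nat j) N 0 1) (fcong (Z.of_nat j') N 0 1))).
    rewrite sat_fand, !sat_fcong, !is_cong_Z by lia. intros [[k Hk] [k' Hk']].
    assert (k = k') by nia. subst. lia. }
  apply (elementary_valid U iota Hel T HZ (fun _ => a)).
  unfold T. change (sat (fun _ => a) (fand (fmap iota (fcong (Z.of_nat j) N 0 1))
                                            (fmap iota (fcong (Z.of_nat j') N 0 1)))).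
  rewrite sat_fand, !fmap_fcong, !sat_fcong by lia. auto.
Qed.

Lemma cong_class_mod N k i (a : U) : 0 < N -> cong_class (N * k) i a -> cong_class N (i mod N) a.
Proof.
  intro HN.
  set (T := @fimp Zstruct (fcong (Z.of_nat i) (N * k) 0 1) (fcong (Z.of_nat (i mod N)) N 0 1)).
  assert (HZ : forall v : nat -> Zstruct, sat v T).
  { intro v. unfold T. rewrite sat_fimp, !sat_fcong, !is_cong_Z by lia. intros [q Hq].
    exists (Z.of_nat k * q + Z.of_nat i / Z.of_nat N)%Z. rewrite Hq, Nat2Z.inj_mod, Nat2Z.inj_mul.
    pose proof (Z.div_mod (Z.of_nat i) (Z.of_nat N) ltac:(lia)). lia. }
  pose proof (elementary_valid U iota Hel T HZ (fun _ => a)) as H.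
  unfold T in H. rewrite fmap_fimp, sat_fimp, !fmap_fcong, !sat_fcong in H by lia. exact H.
Qed.

End TransferredFacts.

(* Variable L holds the bound, L+1 and L+2 the two compared points and L+3 the
   witness of their congruence; all lie above the free variables of g. *)
Definition tail_periodic_body {P : Type} (c : nat -> P) (sg : bool) (N L : nat) (g : form P)
    (j : nat) : form P :=
  fimp (fand (fbeyond sg (tvar L) (tvar (L + 1)))
         (fand (fbeyond sg (tvar L) (tvar (L + 2)))
           (fand (fcong (c j) N (L + 1) (L + 3)) (fcong (c j) N (L + 2) (L + 3)))))
       (fiff (fsubst1 (L + 1) g) (fsubst1 (L + 2) g)).

Definition tail_periodic_form {P : Type} (c : nat -> P) (sg : bool) (N L : nat) (g : form P)
  : form P :=
  fex L (fbigAnd N (fun j => fall (L + 1) (fall (L + 2) (tail_periodic_body c sg N L g j)))).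

Lemma fmap_tail_periodic_form {P Q : Type} (i : P -> Q) c sg N L g :
  fmap i (tail_periodic_form c sg N L g) = tail_periodic_form (fun j => i (c j)) sg N L (fmap i g).
Proof.
  unfold tail_periodic_form. rewrite fmap_fex, fmap_fbigAnd. do 2 f_equal.
  apply functional_extensionality; intro j. unfold tail_periodic_body.
  now rewrite !fmap_fall, fmap_fimp, !fmap_fand, !fmap_fbeyond, !fmap_fcong.
Qed.

Lemma sat_tail_periodic_form {M : structure} (c : nat -> M) sg N L g (v : nat -> M) :
  1 < L -> fvar_bound g <= L ->
  sat v (tail_periodic_form c sg N L g) <->
  exists b, forall j a a', j < N -> beyond sg b a -> beyond sg b a' ->
    is_cong N (c j) a -> is_cong N (c j) a' -> (sat (upd v 1 a) g <-> sat (upd v 1 a') g).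
Proof.
  intros HL Hg.
  assert (Hagree : forall b a a' x,
    sat (upd (upd (upd (upd v L b) (L + 1) a) (L + 2) a') 1 x) g <-> sat (upd v 1 x) g).
  { intros. apply sat_agree_below. intros n Hn.
    destruct (Nat.eq_dec n 1) as [->|]; upd_simpl; reflexivity. }
  assert (Hstep : forall b j a a',
    sat (upd (upd (upd v L b) (L + 1) a) (L + 2) a') (tail_periodic_body c sg N L g j) <->
    (beyond sg b a /\ beyond sg b a' /\ is_cong N (c j) a /\ is_cong N (c j) a' ->
      (sat (upd v 1 a) g <-> sat (upd v 1 a') g))).
  { intros. unfold tail_periodic_body.
    rewrite sat_fimp, !sat_fand, !sat_fbeyond, !sat_fcong, sat_fiff, !sat_fsubst1 by lia.
    simpl. upd_simpl. rewrite !Hagree. reflexivity. }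
  unfold tail_periodic_form. rewrite sat_fex.
  setoid_rewrite sat_fbigAnd. do 2 setoid_rewrite sat_fall. setoid_rewrite Hstep.
  split; intros [b Hb]; exists b.
  - intros j a a' Hj Ha Ha' Hc Hc'. apply (Hb j Hj a a'). auto.
  - intros j Hj a a' [Ha [Ha' [Hc Hc']]]. exact (Hb j a a' Hj Ha Ha' Hc Hc').
Qed.

Lemma Z_tail_periodic_form_valid (g : form Zstruct) : exists N, 0 < N /\
  forall sg L, 1 < L -> fvar_bound g <= L ->
    forall v, sat v (tail_periodic_form (fun j => Z.of_nat j : Zstruct) sg N L g).
Proof.
  destruct (Z_eventually_periodic g 1) as [N [HN Hper]].
  exists N. split; [exact HN|]. intros sg L HL Hg v.
  destruct (Hper v) as [b [Hb Hab]].
  apply sat_tail_periodic_form; auto. exists (if sg then b else (- b)%Z : Zstruct).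
  intros j a a' _ Ha Ha' Hc Hc'. apply Hab.
  - unfold same_far_side. destruct sg; simpl in *; lia.
  - apply is_cong_Z in Hc as [k ->], Hc' as [k' ->]. exists (k' - k)%Z. ring.
Qed.

Section TailPeriodicity.
Variable U : structure.
Variable iota : Z -> U.
Hypothesis Hel : elementary_emb Zstruct U iota.

Definition tail_periodic (sg : bool) (N : nat) (f : form U) : Prop :=
  forall v : nat -> U, exists b, forall j a a', j < N ->
    beyond sg b a -> beyond sg b a' -> cong_class U iota N j a -> cong_class U iota N j a' ->
    (sat (upd v 1 a) f <-> sat (upd v 1 a') f).

Lemma tail_periodic_exists sg f : exists N, 0 < N /\ tail_periodic sg N f.
Proof.
  destruct (abstract_parameters U iota f 2) as [g [K [e [HK Habs]]]].
  destruct (Z_tail_periodic_form_valid g) as [N [HN Hg]].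
  exists N. split; [exact HN|]. intro v.
  set (L := max (fvar_bound g) 2).
  pose proof (elementary_valid U iota Hel _ (Hg sg L ltac:(lia) ltac:(lia)) (env_splice U K v e))
    as H.
  rewrite fmap_tail_periodic_form, sat_tail_periodic_form in H;
    [| unfold L; lia | rewrite fvar_bound_fmap; apply Nat.le_max_l].
  destruct H as [b Hb]. exists b. intros j a a' Hj Ha Ha' Hc Hc'.
  rewrite !Habs, !env_splice_upd by lia. exact (Hb j a a' Hj Ha Ha' Hc Hc').
Qed.

End TailPeriodicity.

(** * Keisler measures *)

Fixpoint sumR (n : nat) (F : nat -> R) : R :=
  match n with O => 0%R | S n => (sumR n F + F n)%R end.

Section FiniteSums.
Local Open Scope R_scope.

Lemma sumR_ext n F G : (forall i, (i < n)%nat -> F i = G i) -> sumR n F = sumR n G.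
Proof. induction n; simpl; intros H; auto. rewrite IHn, H; auto. Qed.

Lemma sumR_add n F G : sumR n (fun i => F i + G i) = sumR n F + sumR n G.
Proof. induction n; simpl; [|rewrite IHn]; lra. Qed.

Lemma sumR_scale_r n c F : sumR n (fun i => F i * c) = sumR n F * c.
Proof. induction n; simpl; [|rewrite IHn]; lra. Qed.

Lemma sumR_nonneg n F : (forall i, (i < n)%nat -> 0 <= F i) -> 0 <= sumR n F.
Proof.
  induction n; simpl; intros H; [lra|].
  pose proof (H n ltac:(lia)). pose proof (IHn ltac:(intros; apply H; lia)). lra.
Qed.

Lemma sumR_app a b F : sumR (a + b) F = sumR a F + sumR b (fun i => F (a + i)%nat).
Proof.
  induction b; simpl; [rewrite Nat.add_0_r; lra|].
  rewrite Nat.add_succ_r. simpl. rewrite IHb. lra.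
Qed.

Lemma sumR_swap k N (G : nat -> nat -> R) :
  sumR k (fun t => sumR N (G t)) = sumR N (fun j => sumR k (fun t => G t j)).
Proof.
  induction k; simpl.
  - induction N; simpl; [|rewrite <- IHN]; lra.
  - now rewrite IHk, <- sumR_add.
Qed.

Lemma sumR_block N k F :
  sumR (N * k) F = sumR N (fun j => sumR k (fun t => F (j + t * N)%nat)).
Proof.
  rewrite <- sumR_swap. induction k; simpl; [now rewrite Nat.mul_0_r|].
  rewrite Nat.mul_succ_r, sumR_app, IHk. f_equal. apply sumR_ext. intros i _. f_equal. lia.
Qed.

Lemma sumR_delta N j F : (j < N)%nat ->
  sumR N (fun i => F i * (if Nat.eqb i j then 1 else 0)) = F j.
Proof.
  intro Hj. induction N; simpl; [lia|]. destruct (Nat.eqb_spec N j) as [->|].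
  - rewrite (sumR_ext _ _ (fun _ => 0)).
    + clear. induction j; simpl; lra.
    + intros i Hi. destruct (Nat.eqb_spec i j); [lia | lra].
  - rewrite IHN by lia. lra.
Qed.

End FiniteSums.

Section KeislerMeasures.
Context {U : structure}.
Variable C : U -> Prop.
Variable S : nat -> Prop.

Lemma formula_in_fand f g : formula_in C S f -> formula_in C S g -> formula_in C S (fand f g).
Proof. unfold formula_in. simpl. tauto. Qed.

Lemma formula_in_fneg f : formula_in C S f -> formula_in C S (fneg f).
Proof. unfold formula_in. simpl. tauto. Qed.

Lemma formula_in_fOr f g : formula_in C S f -> formula_in C S g -> formula_in C S (fOr f g).
Proof. unfold formula_in, fOr. simpl. tauto. Qed.

Lemma formula_in_fbot : formula_in C S fbot.
Proof. unfold formula_in. simpl. tauto. Qed.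

Lemma formula_in_fbigOr n F :
  (forall i, i < n -> formula_in C S (F i)) -> formula_in C S (fbigOr n F).
Proof.
  induction n; simpl; intros H; [apply formula_in_fbot|].
  apply formula_in_fOr; [apply IHn; intros|]; apply H; lia.
Qed.

Local Hint Resolve formula_in_fand formula_in_fneg formula_in_fOr formula_in_fbot : core.

Variable m : form U -> R.
Hypothesis Hm : keisler C S m.

Lemma keisler_equiv f g : formula_in C S f -> formula_in C S g ->
  (forall v, sat v f <-> sat v g) -> m f = m g.
Proof. apply Hm. Qed.

Lemma keisler_nonneg f : formula_in C S f -> (0 <= m f)%R.
Proof. apply Hm. Qed.

Lemma keisler_valid f : formula_in C S f -> (forall v, sat v f) -> m f = 1%R.
Proof. apply Hm. Qed.

Lemma keisler_or f g : formula_in C S f -> formula_in C S g ->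
  (forall v, ~ (sat v f /\ sat v g)) -> m (fOr f g) = (m f + m g)%R.
Proof. apply Hm. Qed.

Lemma keisler_compl f : formula_in C S f -> (m f + m (fneg f) = 1)%R.
Proof.
  intro Hf. rewrite <- keisler_or; auto.
  - apply keisler_valid; auto. intro v. rewrite sat_fOr. simpl. tauto.
  - intros v H. simpl in H. tauto.
Qed.

Lemma keisler_unsat f : formula_in C S f -> (forall v, ~ sat v f) -> m f = 0%R.
Proof.
  intros Hf H. pose proof (keisler_compl f Hf) as E.
  rewrite (keisler_valid (fneg f)) in E; auto. lra.
Qed.

Lemma keisler_split h g : formula_in C S h -> formula_in C S g ->
  m h = (m (fand h g) + m (fand h (fneg g)))%R.
Proof.
  intros Hh Hg. rewrite <- keisler_or; auto.
  - apply keisler_equiv; auto. intro v. rewrite sat_fOr. simpl. tauto.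
  - intros v H. simpl in H. tauto.
Qed.

Lemma keisler_le1 f : formula_in C S f -> (m f <= 1)%R.
Proof.
  intro Hf. pose proof (keisler_compl f Hf). pose proof (keisler_nonneg (fneg f) ltac:(auto)). lra.
Qed.

Lemma keisler_mono f g : formula_in C S f -> formula_in C S g ->
  (forall v, sat v f -> sat v g) -> (m f <= m g)%R.
Proof.
  intros Hf Hg H. rewrite (keisler_split g f Hg Hf), (keisler_equiv (fand g f) f); auto.
  - pose proof (keisler_nonneg (fand g (fneg f)) ltac:(auto)). lra.
  - intro v. simpl. split; [tauto | auto].
Qed.

Lemma keisler_and_full h B : formula_in C S h -> formula_in C S B -> m B = 1%R ->
  m (fand h B) = m h.
Proof.
  intros Hh HB H1. rewrite (keisler_split h B Hh HB).
  assert (m (fand h (fneg B)) <= m (fneg B))%R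
    by (apply keisler_mono; auto; intros v Hv; apply Hv).
  pose proof (keisler_compl B HB). pose proof (keisler_nonneg (fand h (fneg B)) ltac:(auto)). lra.
Qed.

Lemma keisler_fbigOr n F : (forall i, i < n -> formula_in C S (F i)) ->
  (forall i j v, i < j -> j < n -> ~ (sat v (F i) /\ sat v (F j))) ->
  m (fbigOr n F) = sumR n (fun i => m (F i)).
Proof.
  induction n; intros HF HD; simpl.
  - apply keisler_unsat; auto.
  - rewrite keisler_or, IHn; auto.
    + apply formula_in_fbigOr. intros; apply HF; lia.
    + intros v [H1 H2]. rewrite sat_fbigOr in H1. destruct H1 as [i [Hi H1]].
      apply (HD i n v); auto.
Qed.

End KeislerMeasures.

Section CongruenceClasses.
Variable U : structure.
Variable iota : Z -> U.
Hypothesis Hel : elementary_emb Zstruct U iota.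

Definition fcong_y (N j : nat) : form U := fcong (iota (Z.of_nat j)) N 1 2.

Lemma sat_fcong_y v N j : sat v (fcong_y N j) <-> cong_class U iota N j (v 1).
Proof. apply sat_fcong. lia. Qed.

Lemma formula_in_fcong_y (C : U -> Prop) (S : nat -> Prop) N j :
  C (iota (Z.of_nat j)) -> S 1 -> formula_in C S (fcong_y N j).
Proof.
  intros HC HS. unfold fcong_y, fcong, formula_in. simpl.
  repeat split; auto.
  - apply tfv_in_tnmul. simpl. auto.
  - apply tpar_in_tnmul. exact I.
Qed.

Lemma formula_in_allU_fcong_y (S : nat -> Prop) N j :
  S 1 -> formula_in (@allU U) S (fcong_y N j).
Proof. apply formula_in_fcong_y. exact I. Qed.

Lemma fcong_y_disjoint N i j v : i < N -> j < N -> i <> j ->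
  ~ (sat v (fcong_y N i) /\ sat v (fcong_y N j)).
Proof.
  intros Hi Hj Hne [H1 H2]. rewrite sat_fcong_y in H1, H2.
  apply Hne. eapply cong_class_unique; eauto.
Qed.

Variable S : nat -> Prop.
Hypothesis HS : S 1.
Variable rho : form U -> R.
Hypothesis Hrho : keisler (@allU U) S rho.

Local Hint Resolve formula_in_fand formula_in_allU_fcong_y : core.

Lemma keisler_cong_partition N h : 0 < N -> formula_in (@allU U) S h ->
  rho h = sumR N (fun j => rho (fand h (fcong_y N j))).
Proof.
  intros HN Hh. rewrite <- (keisler_fbigOr _ _ _ Hrho); auto.
  - apply (keisler_equiv _ _ _ Hrho); auto.
    + apply formula_in_fbigOr. auto.
    + intro v. rewrite sat_fbigOr. split.
      * intro H. destruct (cong_class_exists U iota Hel N (v 1) HN) as [j [Hj Hc]].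
        exists j. split; auto. split; auto. now apply sat_fcong_y.
      * intros [j [_ [H _]]]. exact H.
  - intros i j v Hij HjN [[_ H1] [_ H2]]. apply (fcong_y_disjoint N i j v); auto; lia.
Qed.

Lemma keisler_cong_sum N : 0 < N -> sumR N (fun j => rho (fcong_y N j)) = 1%R.
Proof.
  intro HN. assert (Htop : formula_in (@allU U) S (fneg fbot))
    by apply formula_in_fneg, formula_in_fbot.
  rewrite <- (keisler_valid _ _ _ Hrho (fneg fbot) Htop) by (intros v H; exact H).
  rewrite (keisler_cong_partition N (fneg fbot) HN Htop).
  apply sumR_ext. intros j Hj. apply (keisler_equiv _ _ _ Hrho); auto.
  intro v. simpl. tauto.
Qed.

Lemma keisler_cong_refine N k j : 0 < N -> 0 < k -> j < N ->
  rho (fcong_y N j) = sumR k (fun t => rho (fcong_y (N * k) (j + t * N))).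
Proof.
  intros HN Hk Hj. rewrite <- (keisler_fbigOr _ _ _ Hrho); auto.
  - apply (keisler_equiv _ _ _ Hrho); auto.
    + apply formula_in_fbigOr. auto.
    + intro v. rewrite sat_fbigOr, sat_fcong_y. split.
      * intro H. destruct (cong_class_exists U iota Hel (N * k) (v 1) ltac:(lia)) as [i [Hi Hc]].
        assert (Hm : i mod N = j).
        { apply (cong_class_unique U iota Hel N (i mod N) j (v 1)); auto.
          - apply Nat.mod_upper_bound; lia.
          - now apply (cong_class_mod U iota Hel N k). }
        exists (i / N). split; [apply Nat.Div0.div_lt_upper_bound; lia|].
        rewrite sat_fcong_y. replace (j + i / N * N) with i; auto.
        pose proof (Nat.div_mod_eq i N). lia.
      * intros [t [Ht H]]. rewrite sat_fcong_y in H.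
        apply (cong_class_mod U iota Hel N k) in H; auto.
        now rewrite Nat.Div0.mod_add, Nat.mod_small in H.
  - intros t t' v Ht Ht'. apply fcong_y_disjoint; nia.
Qed.

End CongruenceClasses.

(** * The measure lambda on L_xy *)

Section Construction.
Variable U : structure.
Variable iota : Z -> U.
Hypothesis Hel : elementary_emb Zstruct U iota.
Variable sg : bool.
Variables mu nu : form U -> R.
Hypothesis Hmu : keisler (@allU U) Sx mu.
Hypothesis Hnu : keisler (@allU U) Sy nu.

Local Notation cong := (cong_class U iota).
Local Notation fcy := (fcong_y U iota).

(* Fresh for g, and distinct from y = 1 and from the witness variable 2 of [fcy]. *)
Definition tail_var (g : form U) : nat := fvar_bound g + 3.

Definition tail_form (N j : nat) (g : form U) : form U :=
  fex (tail_var g) (fall 1 (fimp (fand (fbeyond sg (tvar (tail_var g)) (tvar 1)) (fcy N j)) g)).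

Lemma sat_tail_form v N j g : sat v (tail_form N j g) <->
  exists b, forall a, beyond sg b a -> cong N j a -> sat (upd v 1 a) g.
Proof.
  unfold tail_form. rewrite sat_fex.
  assert (Hfresh : forall b a, sat (upd (upd v (tail_var g) b) 1 a) g <-> sat (upd v 1 a) g).
  { intros b a. apply sat_agree_below. intros n Hn. unfold tail_var in *.
    destruct (Nat.eq_dec n 1) as [->|]; upd_simpl; reflexivity. }
  assert (Hbody : forall b a, sat (upd (upd v (tail_var g) b) 1 a)
      (fimp (fand (fbeyond sg (tvar (tail_var g)) (tvar 1)) (fcy N j)) g) <->
      (beyond sg b a -> cong N j a -> sat (upd v 1 a) g)).
  { intros b a. rewrite sat_fimp, sat_fand, sat_fbeyond, sat_fcong_y, Hfresh. simpl.
    unfold tail_var. upd_simpl. tauto. }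
  split; intros [b Hb]; exists b.
  - intros a. rewrite sat_fall in Hb. apply Hbody, Hb.
  - rewrite sat_fall. intro a. apply Hbody, Hb.
Qed.

Lemma formula_in_tail_form N j g : fv_in Sxy g -> formula_in (@allU U) Sx (tail_form N j g).
Proof.
  intro Hg. split; [|apply par_in_allU]. simpl.
  set (S1 := fun k => k = 1 \/ (k = tail_var g \/ Sx k)).
  assert (H1 : fv_in S1 (fbeyond sg (@tvar U (tail_var g)) (tvar 1)))
    by (destruct sg; simpl; unfold S1; tauto).
  assert (H2 : fv_in S1 (fcy N j))
    by (apply (proj1 (formula_in_allU_fcong_y U iota S1 N j ltac:(unfold S1; tauto)))).
  assert (H3 : fv_in S1 g)
    by (apply (fv_in_mono g Sxy); auto; unfold Sxy, S1, Sx; intros k [-> | ->]; tauto).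
  exact (conj (conj H1 H2) H3).
Qed.

Local Notation tail_periodic := (tail_periodic U iota sg).

Definition period_of (g : form U) : nat :=
  epsilon (inhabits 1) (fun N => 0 < N /\ tail_periodic N g).

Lemma period_of_spec g : 0 < period_of g /\ tail_periodic (period_of g) g.
Proof. exact (epsilon_spec (inhabits 1) _ (tail_periodic_exists U iota Hel sg g)). Qed.

Lemma tail_periodic_mul N k g : tail_periodic N g -> 0 < N -> 0 < k -> tail_periodic (N * k) g.
Proof.
  intros Hv HN Hk v. destruct (Hv v) as [b Hb]. exists b. intros j a a' Hj Ha Ha' Hc Hc'.
  apply (Hb (j mod N)); try apply (cong_class_mod U iota Hel N k); auto.
  apply Nat.mod_upper_bound; lia.
Qed.

Lemma tail_periodic_equiv N g g' :
  (forall v, sat v g <-> sat v g') -> tail_periodic N g -> tail_periodic N g'.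
Proof.
  intros E Hv v. destruct (Hv v) as [b Hb]. exists b. intros. rewrite <- !E. eauto.
Qed.

Lemma tail_form_refine N k j t g : tail_periodic N g -> 0 < N -> 0 < k -> j < N -> t < k ->
  forall v, sat v (tail_form (N * k) (j + t * N) g) <-> sat v (tail_form N j g).
Proof.
  intros Hv HN Hk Hj Ht v. rewrite !sat_tail_form.
  assert (Hmod : forall a, cong (N * k) (j + t * N) a -> cong N j a).
  { intros a Ha. apply (cong_class_mod U iota Hel N k) in Ha; auto.
    now rewrite Nat.Div0.mod_add, Nat.mod_small in Ha. }
  split; intros [b Hb].
  - destruct (Hv v) as [b0 Hb0]. exists b0. intros a Ha Hc.
    destruct (beyond_common U iota Hel sg b b0) as [c [Hc1 Hc2]].
    destruct (beyond_cong_class_exists U iota Hel sg (N * k) (j + t * N) c ltac:(lia))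
      as [a' [Ha' Hc']].
    apply (Hb0 j a a' Hj Ha (beyond_trans U iota Hel sg _ _ _ Hc2 Ha') Hc (Hmod a' Hc')).
    apply Hb; auto. eapply beyond_trans; eauto.
  - exists b. intros a Ha Hc. apply Hb; auto.
Qed.

Definition lam_at (N : nat) (g : form U) : R :=
  sumR N (fun j => (nu (fcy N j) * mu (tail_form N j g))%R).

Definition lam (g : form U) : R := lam_at (period_of g) g.

Lemma lam_at_refine N k g : tail_periodic N g -> 0 < N -> 0 < k -> fv_in Sxy g ->
  lam_at N g = lam_at (N * k) g.
Proof.
  intros Hv HN Hk Hg. unfold lam_at. rewrite sumR_block. apply sumR_ext. intros j Hj.
  rewrite (sumR_ext _ _ (fun t => (nu (fcy (N * k) (j + t * N)) * mu (tail_form N j g))%R)).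
  - rewrite sumR_scale_r. f_equal. apply (keisler_cong_refine U iota Hel Sy eq_refl nu Hnu); auto.
  - intros t Ht. f_equal. apply (keisler_equiv _ _ _ Hmu); try apply formula_in_tail_form; auto.
    intro v. apply tail_form_refine; auto.
Qed.

Lemma lam_eq_lam_at M g : tail_periodic M g -> 0 < M -> fv_in Sxy g -> lam g = lam_at M g.
Proof.
  intros Hv HM Hg. destruct (period_of_spec g) as [HN HvN]. unfold lam.
  rewrite (lam_at_refine (period_of g) M g), (lam_at_refine M (period_of g) g); auto.
  now rewrite Nat.mul_comm.
Qed.

Lemma lam_equiv g g' : fv_in Sxy g -> fv_in Sxy g' -> (forall v, sat v g <-> sat v g') ->
  lam g = lam g'.
Proof.
  intros Hg Hg' E. destruct (period_of_spec g) as [HN Hv].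
  rewrite (lam_eq_lam_at (period_of g) g' (tail_periodic_equiv _ g g' E Hv) HN Hg').
  apply sumR_ext. intros j Hj. f_equal.
  apply (keisler_equiv _ _ _ Hmu); try apply formula_in_tail_form; auto.
  intro v. rewrite !sat_tail_form.
  split; intros [b Hb]; exists b; intros a Ha Hc; apply E; auto.
Qed.

Lemma lam_nonneg g : fv_in Sxy g -> (0 <= lam g)%R.
Proof.
  intro Hg. apply sumR_nonneg. intros j Hj. apply Rmult_le_pos.
  - apply (keisler_nonneg _ _ _ Hnu), formula_in_allU_fcong_y. reflexivity.
  - apply (keisler_nonneg _ _ _ Hmu), formula_in_tail_form, Hg.
Qed.

Lemma lam_valid g : fv_in Sxy g -> (forall v, sat v g) -> lam g = 1%R.
Proof.
  intros Hg Hval. destruct (period_of_spec g) as [HN _]. unfold lam, lam_at.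
  rewrite <- (keisler_cong_sum U iota Hel Sy eq_refl nu Hnu (period_of g) HN).
  apply sumR_ext. intros j Hj.
  rewrite (keisler_valid _ _ _ Hmu (tail_form _ j g)); [lra | apply formula_in_tail_form; auto|].
  intro v. rewrite sat_tail_form. exists (s0 U). intros; apply Hval.
Qed.

Lemma tail_form_or M j g h : 0 < M -> tail_periodic M g -> tail_periodic M h -> j < M ->
  forall v, sat v (tail_form M j (fOr g h)) <-> sat v (tail_form M j g) \/ sat v (tail_form M j h).
Proof.
  intros HM Vg Vh Hj v. rewrite !sat_tail_form. split.
  - intros [b Hb]. destruct (Vg v) as [bg Hbg], (Vh v) as [bh Hbh].
    destruct (beyond_common U iota Hel sg b bg) as [c1 [Hc1 Hc1']].
    destruct (beyond_common U iota Hel sg c1 bh) as [c2 [Hc2 Hc2']].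
    destruct (beyond_cong_class_exists U iota Hel sg M j c2 HM) as [a [Ha Hca]].
    assert (Hb_a : beyond sg b a) by (do 2 (eapply beyond_trans; eauto)).
    assert (Hbg_a : beyond sg bg a) by (do 2 (eapply beyond_trans; eauto)).
    assert (Hbh_a : beyond sg bh a) by (eapply beyond_trans; eauto).
    specialize (Hb a Hb_a Hca). rewrite sat_fOr in Hb. destruct Hb as [Hga|Hha].
    + left. exists bg. intros a' Ha' Hc'. apply (Hbg j a a' Hj Hbg_a Ha' Hca Hc'), Hga.
    + right. exists bh. intros a' Ha' Hc'. apply (Hbh j a a' Hj Hbh_a Ha' Hca Hc'), Hha.
  - intros [[b Hb]|[b Hb]]; exists b; intros a Ha Hc; rewrite sat_fOr; auto.
Qed.

Lemma tail_form_disjoint M j g h : 0 < M -> (forall v, ~ (sat v g /\ sat v h)) ->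
  forall v, ~ (sat v (tail_form M j g) /\ sat v (tail_form M j h)).
Proof.
  intros HM Hdis v [Hg Hh]. rewrite sat_tail_form in Hg, Hh.
  destruct Hg as [b1 Hb1], Hh as [b2 Hb2].
  destruct (beyond_common U iota Hel sg b1 b2) as [c [Hc1 Hc2]].
  destruct (beyond_cong_class_exists U iota Hel sg M j c HM) as [a [Ha Hca]].
  apply (Hdis (upd v 1 a)). split; [apply Hb1 | apply Hb2]; auto; eapply beyond_trans; eauto.
Qed.

Lemma lam_or g h : fv_in Sxy g -> fv_in Sxy h -> (forall v, ~ (sat v g /\ sat v h)) ->
  lam (fOr g h) = (lam g + lam h)%R.
Proof.
  intros Hg Hh Hdis. assert (Hgh : fv_in Sxy (fOr g h)) by (simpl; tauto).
  destruct (period_of_spec g) as [H1 V1], (period_of_spec h) as [H2 V2],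
    (period_of_spec (fOr g h)) as [H3 V3].
  set (M := period_of g * period_of h * period_of (fOr g h)).
  assert (HM : 0 < M) by (unfold M; lia).
  assert (Vg : tail_periodic M g)
    by (replace M with (period_of g * (period_of h * period_of (fOr g h))) by (unfold M; lia);
        apply tail_periodic_mul; auto; lia).
  assert (Vh : tail_periodic M h)
    by (replace M with (period_of h * (period_of g * period_of (fOr g h))) by (unfold M; lia);
        apply tail_periodic_mul; auto; lia).
  assert (Vo : tail_periodic M (fOr g h))
    by (replace M with (period_of (fOr g h) * (period_of g * period_of h)) by (unfold M; lia);
        apply tail_periodic_mul; auto; lia).
  rewrite (lam_eq_lam_at M (fOr g h)), (lam_eq_lam_at M g), (lam_eq_lam_at M h); auto.
  unfold lam_at. rewrite <- sumR_add. apply sumR_ext. intros j Hj.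
  rewrite <- Rmult_plus_distr_l, <- (keisler_or _ _ _ Hmu); try apply formula_in_tail_form; auto.
  - f_equal. apply (keisler_equiv _ _ _ Hmu).
    + apply formula_in_tail_form; auto.
    + apply formula_in_fOr; apply formula_in_tail_form; auto.
    + intro v. rewrite sat_fOr. now apply tail_form_or.
  - now apply tail_form_disjoint.
Qed.

Lemma lam_keisler : keisler (inZ iota) Sxy lam.
Proof.
  split; [|split; [|split]].
  - intros g g' [Hg _] [Hg' _]. now apply lam_equiv.
  - intros g [Hg _]. now apply lam_nonneg.
  - intros g [Hg _]. now apply lam_valid.
  - intros g h [Hg _] [Hh _]. now apply lam_or.
Qed.

Lemma lam_marginal_x f : fv_in Sx f -> lam (fand f (feq vy vy)) = mu f.
Proof.
  intro Hf. assert (Hg : fv_in Sxy (fand f (feq (@vy U) vy))).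
  { simpl. split; [apply (fv_in_mono f Sx); auto; unfold Sx, Sxy; tauto | unfold Sxy; tauto]. }
  destruct (period_of_spec (fand f (feq vy vy))) as [HN _].
  unfold lam, lam_at.
  rewrite (sumR_ext _ _ (fun j => (nu (fcy (period_of (fand f (feq vy vy))) j) * mu f)%R)).
  { rewrite sumR_scale_r, (keisler_cong_sum U iota Hel Sy eq_refl nu Hnu); auto. lra. }
  intros j Hj. f_equal. apply (keisler_equiv _ _ _ Hmu);
    [apply formula_in_tail_form; auto | split; [auto | apply par_in_allU] |].
  assert (Hx : forall v a, sat (upd v 1 a) f <-> sat v f).
  { intros v a. apply (sat_agree_fv f Sx); auto. intros n ->. now upd_simpl. }
  intro v. rewrite sat_tail_form. split.
  - intros [b Hb]. destruct (beyond_cong_class_exists U iota Hel sg _ j b HN) as [a [Ha Hc]].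
    apply (Hx v a), (Hb a Ha Hc).
  - intro H. exists (s0 U). intros a _ _. split; [apply Hx, H | reflexivity].
Qed.

Lemma lam_beyond_xy : lam (fbeyond sg vx vy) = 1%R.
Proof.
  assert (Hg : fv_in Sxy (fbeyond sg (@vx U) vy)) by (destruct sg; simpl; unfold Sxy; tauto).
  destruct (period_of_spec (fbeyond sg (@vx U) vy)) as [HN _]. unfold lam, lam_at.
  rewrite <- (keisler_cong_sum U iota Hel Sy eq_refl nu Hnu _ HN).
  apply sumR_ext. intros j Hj.
  rewrite (keisler_valid _ _ _ Hmu); [lra | apply formula_in_tail_form; auto|].
  intro v. rewrite sat_tail_form. exists (v 0). intros a Ha _.
  rewrite sat_fbeyond. simpl. now upd_simpl.
Qed.

Lemma lam_fcong_y N j : 0 < N -> j < N -> lam (fand (feq vx vx) (fcy N j)) = nu (fcy N j).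
Proof.
  intros HN Hj. set (g := fand (feq (@vx U) vx) (fcy N j)).
  assert (Hg : fv_in Sxy g).
  { split; [simpl; unfold Sxy; tauto|].
    apply (proj1 (formula_in_allU_fcong_y U iota Sxy N j ltac:(unfold Sxy; tauto))). }
  assert (Hsg : forall v a, sat (upd v 1 a) g <-> cong N j a).
  { intros v a. unfold g. rewrite sat_fand, sat_fcong_y, upd_eq. simpl. tauto. }
  assert (Hv : tail_periodic N g).
  { intro v. exists (s0 U). intros i a a' Hi _ _ Hc Hc'. rewrite !Hsg.
    split; intro H; [rewrite <- (cong_class_unique U iota Hel N i j a Hi Hj Hc H)
                   | rewrite <- (cong_class_unique U iota Hel N i j a' Hi Hj Hc' H)]; auto. }
  rewrite (lam_eq_lam_at N g Hv HN Hg). unfold lam_at.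
  rewrite <- (sumR_delta N j (fun i => nu (fcy N i))) by auto.
  apply sumR_ext. intros i Hi. f_equal. destruct (Nat.eqb_spec i j) as [->|Hne].
  - apply (keisler_valid _ _ _ Hmu); [apply formula_in_tail_form; auto|].
    intro v. rewrite sat_tail_form. exists (s0 U). intros a _ Hc. now apply Hsg.
  - apply (keisler_unsat _ _ _ Hmu); [apply formula_in_tail_form; auto|].
    intros v H. rewrite sat_tail_form in H. destruct H as [b Hb].
    destruct (beyond_cong_class_exists U iota Hel sg N i b HN) as [a [Ha Hc]].
    apply Hne, (cong_class_unique U iota Hel N i j a); auto. now apply (Hsg v), Hb.
Qed.

End Construction.

(** * Uniqueness of the y-marginal *)

Section Uniqueness.
Variable U : structure.
Variable iota : Z -> U.
Hypothesis Hel : elementary_emb Zstruct U iota.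
Variable sg : bool.

Local Notation cong := (cong_class U iota).
Local Notation fcy := (fcong_y U iota).

Lemma keisler_y_tail_sum rho f N b (v0 : nat -> U) :
  keisler (@allU U) Sy rho -> rho (fbeyond sg (tpar b) vy) = 1%R ->
  formula_in (@allU U) Sy f -> 0 < N ->
  (forall j a a', j < N -> beyond sg b a -> beyond sg b a' -> cong N j a -> cong N j a' ->
     (sat (upd v0 1 a) f <-> sat (upd v0 1 a') f)) ->
  rho f = sumR N (fun j =>
    if excluded_middle_informative (exists a, beyond sg b a /\ cong N j a /\ sat (upd v0 1 a) f)
    then rho (fcy N j) else 0%R).
Proof.
  intros Hr HB Hf HN Hper.
  set (B := fbeyond sg (tpar b) (@vy U)).
  assert (HfB : formula_in (@allU U) Sy B)
    by (split; [unfold B, vy; destruct sg; simpl; unfold Sy; tauto | apply par_in_allU]).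
  assert (Hcy : forall j, formula_in (@allU U) Sy (fcy N j))
    by (intro; apply formula_in_allU_fcong_y; reflexivity).
  assert (Hy : forall v, sat v f <-> sat (upd v0 1 (v 1)) f).
  { intro v. apply (sat_agree_fv f Sy); [|apply Hf]. intros n ->. now rewrite upd_eq. }
  rewrite <- (keisler_and_full _ _ _ Hr f B Hf HfB HB).
  rewrite (keisler_cong_partition U iota Hel Sy eq_refl rho Hr N); auto using formula_in_fand.
  apply sumR_ext. intros j Hj.
  destruct (excluded_middle_informative _) as [[a [Ha [Hca Hfa]]]|Hno].
  - rewrite <- (keisler_and_full _ _ _ Hr (fcy N j) B (Hcy j) HfB HB).
    apply (keisler_equiv _ _ _ Hr); auto using formula_in_fand.
    intro v. rewrite !sat_fand, Hy, sat_fcong_y. unfold B. rewrite sat_fbeyond. simpl.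
    split; [tauto|]. intros [Hc Hb]. split; auto. split; auto.
    apply (Hper j (v 1) a Hj Hb Ha Hc Hca), Hfa.
  - apply (keisler_unsat _ _ _ Hr); auto using formula_in_fand.
    intros v Hv. rewrite !sat_fand, Hy, sat_fcong_y in Hv. unfold B in Hv.
    rewrite sat_fbeyond in Hv. simpl in Hv. apply Hno. exists (v 1). tauto.
Qed.

Lemma keisler_y_tail_unique (rho1 rho2 : form U -> R) :
  keisler (@allU U) Sy rho1 -> keisler (@allU U) Sy rho2 ->
  (forall b, rho1 (fbeyond sg (tpar b) vy) = 1%R) ->
  (forall b, rho2 (fbeyond sg (tpar b) vy) = 1%R) ->
  (forall N j, 0 < N -> j < N -> rho1 (fcy N j) = rho2 (fcy N j)) ->
  forall f, formula_in (@allU U) Sy f -> rho1 f = rho2 f.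
Proof.
  intros H1 H2 B1 B2 Hcy f Hf.
  destruct (tail_periodic_exists U iota Hel sg f) as [N [HN Hper]].
  set (v0 := fun _ : nat => s0 U). destruct (Hper v0) as [b Hb].
  rewrite (keisler_y_tail_sum rho1 f N b v0), (keisler_y_tail_sum rho2 f N b v0); auto.
  apply sumR_ext. intros j Hj. destruct (excluded_middle_informative _); auto.
Qed.

Lemma keisler_marginal_y (om : form U -> R) : keisler (@allU U) Sxy om ->
  keisler (@allU U) Sy (fun h => om (fand (feq vx vx) h)).
Proof.
  intro Hom.
  assert (Hlift : forall h, formula_in (@allU U) Sy h ->
    formula_in (@allU U) Sxy (fand (feq vx vx) h)).
  { intros h [Hh _]. split; [|apply par_in_allU]. simpl. split; [unfold Sxy; tauto|].
    apply (fv_in_mono h Sy); auto. unfold Sy, Sxy; tauto. }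
  split; [|split; [|split]].
  - intros f g Hf Hg E. apply (keisler_equiv _ _ _ Hom); auto.
    intro v. rewrite !sat_fand, (E v). reflexivity.
  - intros f Hf. apply (keisler_nonneg _ _ _ Hom); auto.
  - intros f Hf Hv. apply (keisler_valid _ _ _ Hom); auto. intro v. simpl. auto.
  - intros f g Hf Hg Hd. rewrite <- (keisler_or _ _ _ Hom); auto.
    + apply (keisler_equiv _ _ _ Hom); auto using formula_in_fOr.
      intro v. rewrite sat_fOr, sat_fand, !sat_fOr, !sat_fand. tauto.
    + intros v [[_ H1] [_ H2]]. apply (Hd v); auto.
Qed.

Lemma keisler_beyond_chain (om : form U -> R) b : keisler (@allU U) Sxy om ->
  om (fand (fbeyond sg (tpar b) vx) (feq vy vy)) = 1%R -> om (fbeyond sg vx vy) = 1%R ->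
  om (fand (feq vx vx) (fbeyond sg (tpar b) vy)) = 1%R.
Proof.
  intro Hom.
  set (Y := fand (fbeyond sg (tpar b) (@vx U)) (feq vy vy)).
  set (X := fbeyond sg (@vx U) vy).
  set (Z := fand (feq (@vx U) vx) (fbeyond sg (tpar b) vy)).
  intros HY HX.
  assert (HfX : formula_in (@allU U) Sxy X)
    by (split; [unfold X, vx, vy; destruct sg; simpl; unfold Sxy; tauto | apply par_in_allU]).
  assert (HfY : formula_in (@allU U) Sxy Y)
    by (split; [unfold Y, vx, vy; destruct sg; simpl; unfold Sxy; tauto | apply par_in_allU]).
  assert (HfZ : formula_in (@allU U) Sxy Z)
    by (split; [unfold Z, vx, vy; destruct sg; simpl; unfold Sxy; tauto | apply par_in_allU]).
  apply Rle_antisym; [now apply (keisler_le1 _ _ _ Hom)|].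
  rewrite <- HY, <- (keisler_and_full _ _ _ Hom Y X HfY HfX HX).
  apply (keisler_mono _ _ _ Hom); auto using formula_in_fand.
  intros v [[HYv _] HXv]. split; [reflexivity|]. unfold X, Y in *.
  rewrite sat_fbeyond in HYv, HXv |- *. eapply beyond_trans; eauto.
Qed.

Variables mu nu : form U -> R.
Hypothesis Hmu : keisler (@allU U) Sx mu.
Hypothesis Hnu : keisler (@allU U) Sy nu.

Lemma geqEZ_of_tails :
  (forall b : U, mu (fbeyond sg (tpar b) vx) = 1%R /\ nu (fbeyond sg (tpar b) vy) = 1%R) ->
  geqEZ iota mu nu.
Proof.
  intro Htail. exists (lam U iota sg mu nu). split; [now apply lam_keisler|]. split.
  { intros f [Hf _]. now apply lam_marginal_x. }
  intros om Hom Hlam Hmarg f Hf.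
  change ((fun h => om (fand (feq vx vx) h)) f = nu f).
  apply (keisler_y_tail_unique _ nu (keisler_marginal_y om Hom) Hnu); auto.
  - intro b. apply keisler_beyond_chain; auto.
    + rewrite Hmarg; [apply Htail|].
      split; [destruct sg; simpl; unfold Sx; tauto | apply par_in_allU].
    + rewrite Hlam; [now apply lam_beyond_xy|].
      split; [destruct sg; simpl; unfold Sxy; tauto | destruct sg; simpl; auto].
  - intro b. apply Htail.
  - intros N j HN Hj. cbv beta. rewrite Hlam; [now apply lam_fcong_y|].
    apply formula_in_fand; [split; simpl; unfold Sxy; tauto|].
    apply formula_in_fcong_y; [now exists (Z.of_nat j) | unfold Sxy; tauto].
Qed.

End Uniqueness.

Theorem proposition6p3 (U : structure) (iota : Z -> U)
  (Hel : elementary_emb Zstruct U iota) (Hsat : saturated U)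
  (mu nu : form U -> R)
  (Hmu : keisler (@allU U) Sx mu) (Hnu : keisler (@allU U) Sy nu) :
  ((forall b : U, mu (flt (tpar b) vx) = 1%R /\ nu (flt (tpar b) vy) = 1%R) ->
     geqEZ iota mu nu) /\
  ((forall b : U, mu (flt vx (tpar b)) = 1%R /\ nu (flt vy (tpar b)) = 1%R) ->
     geqEZ iota mu nu).
Proof.
  split.
  - exact (geqEZ_of_tails U iota Hel true mu nu Hmu Hnu).
  - exact (geqEZ_of_tails U iota Hel false mu nu Hmu Hnu).
Qed.
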